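(* Let $\mathsf{P}$ and $\mathsf{Q}$ be $\Pi^1_2$ principles such that both $\mathsf{P}$ and $\mathsf{Q}$ are total and $\mathsf{P}$ has finite tolerance. Then: (1) if $\langle \mathsf{Q},\mathsf{P}\rangle \leq_{\mathrm{sW}} \mathsf{P}$, then $\mathsf{Q}^{\omega} \leq_{\mathrm{sW}} \mathsf{P}$; (2) if $\langle \mathsf{Q},\mathsf{P}\rangle \leq_{\mathrm{W}} \mathsf{P}$, then $\mathsf{Q}^{\omega} \leq_{\mathrm{W}} \mathsf{P}$.
   Context: A $\Pi^1_2$ principle $\mathsf{P}$ (a statement $(\forall X)(\exists Y)\varphi(X,Y)$ with $\varphi$ arithmetical) is viewed as a problem: its instances are the sets $X$ in its domain and the solutions to $X$ are the $Y$ with $\varphi(X,Y)$. Subsets of $\omega$ are identified with elements of $2^\omega$. For $\Pi^1_2$ principles $\mathsf{P},\mathsf{Q}$: $\mathsf{P}\leq_{\mathrm{W}}\mathsf{Q}$ (Weihrauch reducible) if there are Turing functionals $\Phi,\Psi$ such that for every instance $A$ of $\mathsf{P}$, $\Phi(A)$ is an instance of $\mathsf{Q}$, and for every solution $T$ to $\Phi(A)$, $\Psi(A\oplus T)$ is a solution to $A$; $\mathsf{P}\leq_{\mathrm{sW}}\mathsf{Q}$ (strongly Weihrauch reducible) is the same but with $\Psi(T)$ in place of $\Psi(A\oplus T)$. The parallel product $\langle\mathsf{P},\mathsf{Q}\rangle$ has as instances pairs $\langle A,B\rangle$ with $A$ an instance of $\mathsf{P}$ and $B$ an instance of $\mathsf{Q}$,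 with solutions the pairs $\langle S,T\rangle$ where $S$ solves $A$ and $T$ solves $B$. $\mathsf{Q}^\omega$ has as instances sequences $\langle A_i : i\in\omega\rangle$ of instances of $\mathsf{Q}$ (coded as a single set), with solutions the sequences $\langle S_i:i\in\omega\rangle$ with each $S_i$ a solution to $A_i$. $\mathsf{P}$ is total if every element of $2^\omega$ is (codes) an instance of $\mathsf{P}$. $\mathsf{P}$ has finite tolerance if there is a Turing functional $\Theta$ such that whenever $B_1,B_2$ are instances of $\mathsf{P}$ with $B_1(x)=B_2(x)$ for all $x\geq m$, and $S_1$ is a solution to $B_1$, then $\Theta(S_1,m)$ is a solution to $B_2$. *)

From Stdlib Require Import Arith List Cantor.
Import ListNotations.

Definition cset := nat -> bool.

(* Oracle partial recursive functions (mu-recursive functions with an  *)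
(* oracle primitive).  A Turing functional is given by such a program. *)
Inductive prog : Type :=
| PZero
| PSucc
| PProj (i : nat)
| POracle
| PComp (f : prog) (gs : list prog)
| PPrimRec (f g : prog)
| PMu (f : prog).

Definition b2n (b : bool) : nat := if b then 1 else 0.

Inductive eval : prog -> cset -> list nat -> nat -> Prop :=
| ev_zero X xs : eval PZero X xs 0
| ev_succ X xs : eval PSucc X xs (S (nth 0 xs 0))
| ev_proj i X xs : eval (PProj i) X xs (nth i xs 0)
| ev_oracle X xs : eval POracle X xs (b2n (X (nth 0 xs 0)))
| ev_comp f gs X xs ys y :
    eval_list gs X xs ys -> eval f X ys y -> eval (PComp f gs) X xs y
| ev_prim0 f g X xs y :
    eval f X xs y -> eval (PPrimRec f g) X (0 :: xs) y
| ev_primS f g X k xs r y :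
    eval (PPrimRec f g) X (k :: xs) r -> eval g X (k :: r :: xs) y ->
    eval (PPrimRec f g) X (S k :: xs) y
| ev_mu f X xs n :
    eval f X (n :: xs) 0 ->
    (forall m, m < n -> exists k, eval f X (m :: xs) (S k)) ->
    eval (PMu f) X xs n
with eval_list : list prog -> cset -> list nat -> list nat -> Prop :=
| evl_nil X xs : eval_list [] X xs []
| evl_cons g gs X xs y ys :
    eval g X xs y -> eval_list gs X xs ys -> eval_list (g :: gs) X xs (y :: ys).

Definition computes (p : prog) (X Y : cset) : Prop :=
  forall n, eval p X [n] (b2n (Y n)).

Definition computes2 (p : prog) (X : cset) (m : nat) (Y : cset) : Prop :=
  forall n, eval p X [m; n] (b2n (Y n)).

Definition join (A B : cset) : cset :=
  fun n => if Nat.even n then A (Nat.div2 n) else B (Nat.div2 n).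
Definition left_part (Z : cset) : cset := fun k => Z (2 * k).
Definition right_part (Z : cset) : cset := fun k => Z (2 * k + 1).
Definition column (Z : cset) (i : nat) : cset := fun n => Z (Cantor.to_nat (i, n)).

(* Problems (Pi^1_2 principles viewed as problems). *)
Record problem : Type := Problem {
  instance : cset -> Prop;
  solution : cset -> cset -> Prop
}.

Definition total (P : problem) : Prop := forall X, instance P X.

(* Parallel product <P, Q>: instances <A,B> coded as A (+) B. *)
Definition parallel (P Q : problem) : problem := {|
  instance := fun Z => instance P (left_part Z) /\ instance Q (right_part Z);
  solution := fun Z W => solution P (left_part Z) (left_part W) /\
                         solution Q (right_part Z) (right_part W)
|}.

(* Q^omega: sequences of Q-instances coded as a single set via Cantor pairing. *)
Definition omega_power (Q : problem) : problem := {|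
  instance := fun Z => forall i, instance Q (column Z i);
  solution := fun Z W => forall i, solution Q (column Z i) (column W i)
|}.

Definition weihrauch_le (P Q : problem) : Prop :=
  exists Phi Psi : prog,
    forall A, instance P A ->
      (exists B, computes Phi A B /\ instance Q B) /\
      (forall B, computes Phi A B -> forall T, solution Q B T ->
         exists S, computes Psi (join A T) S /\ solution P A S).

Definition strong_weihrauch_le (P Q : problem) : Prop :=
  exists Phi Psi : prog,
    forall A, instance P A ->
      (exists B, computes Phi A B /\ instance Q B) /\
      (forall B, computes Phi A B -> forall T, solution Q B T ->
         exists S, computes Psi T S /\ solution P A S).

Definition finite_tolerance (P : problem) : Prop :=
  exists Theta : prog,
    forall B1 B2 m, instance P B1 -> instance P B2 ->
      (forall x, m <= x -> B1 x = B2 x) ->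
      forall S1, solution P B1 S1 ->
        exists S2, computes2 Theta S1 m S2 /\ solution P B2 S2.

From Stdlib Require Import Arith List Lia Cantor Classical ClassicalEpsilon FunctionalExtensionality.
Import ListNotations.

(* Theorem 2.5: if P, Q are total and P has finite tolerance (witnessed by
   Theta), a (strong) Weihrauch reduction (Phi, Psi) of <Q,P> to P lifts to
   one of Q^omega to P.  Forward: from A = <A_k> compute C_0, where C_k is 0
   below a threshold m_k and equals Phi(A_k (+) C_(k+1)) from m_k on; the m_k
   come from a uniform modulus of the total functional Phi (fan theorem) and
   make this infinite regress computable.  Backward: from a solution R_0 = T
   of C_0, Theta(R_k, m_k) solves Phi(A_k (+) C_(k+1)), Psi turns it into a
   solution W_k of <A_k, C_(k+1)>, whose halves solve A_k and C_(k+1)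
   (= R_(k+1)); this chain is run with growing time bounds. *)

Section ProgInd.
Variable Prop_of : prog -> Prop.
Hypothesis case_zero : Prop_of PZero.
Hypothesis case_succ : Prop_of PSucc.
Hypothesis case_proj : forall i, Prop_of (PProj i).
Hypothesis case_oracle : Prop_of POracle.
Hypothesis case_comp : forall f gs, Prop_of f -> Forall Prop_of gs -> Prop_of (PComp f gs).
Hypothesis case_primrec : forall f g, Prop_of f -> Prop_of g -> Prop_of (PPrimRec f g).
Hypothesis case_mu : forall f, Prop_of f -> Prop_of (PMu f).
Fixpoint prog_nested_ind (p : prog) : Prop_of p :=
  match p with
  | PZero => case_zero | PSucc => case_succ | PProj i => case_proj i | POracle => case_oracle
  | PComp f gs => case_comp f gs (prog_nested_ind f)
      ((fix go (l : list prog) : Forall Prop_of l :=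
          match l with
          | [] => Forall_nil _
          | g :: l' => Forall_cons _ (prog_nested_ind g) (go l')
          end) gs)
  | PPrimRec f g => case_primrec f g (prog_nested_ind f) (prog_nested_ind g)
  | PMu f => case_mu f (prog_nested_ind f)
  end.
End ProgInd.

Lemma eval_det : forall p X xs y, eval p X xs y -> forall y', eval p X xs y' -> y = y'.
Proof.
  intro p; induction p using prog_nested_ind; intros X xs y E y' E'.
  - inversion E; inversion E'; subst; auto.
  - inversion E; inversion E'; subst; auto.
  - inversion E; inversion E'; subst; auto.
  - inversion E; inversion E'; subst; auto.
  - inversion E as [| | | |? ? ? ? ys ? Hargs Hf| | |]; subst.
    inversion E' as [| | | |? ? ? ? ys' ? Hargs' Hf'| | |]; subst.
    assert (ys = ys').
    { clear E E' Hf Hf'. revert ys ys' Hargs Hargs'. induction H; intros ys ys' A B.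
      - inversion A; inversion B; subst; auto.
      - inversion A; inversion B; subst. f_equal; eauto. }
    subst; eauto.
  - revert y y' E E'. induction xs as [|n xs']; intros y y' E E'; [inversion E|].
    revert y y' E E'. induction n; intros y y' E E'.
    + inversion E; inversion E'; subst; eauto.
    + inversion E; inversion E'; subst.
      assert (r = r0) by eauto. subst; eauto.
  - inversion E; inversion E'; subst.
    destruct (Nat.lt_trichotomy y y') as [Hl|[He|Hl]]; auto.
    + match goal with Hf : forall m, m < y' -> _ |- _ => destruct (Hf _ Hl) as [k Hk] end.
      match goal with Hz : eval p X (y :: xs) 0 |- _ => specialize (IHp _ _ _ Hz _ Hk) end.
      discriminate.
    + match goal with Hf : forall m, m < y -> _ |- _ => destruct (Hf _ Hl) as [k Hk] end.
      match goal with Hz : eval p X (y' :: xs) 0 |- _ => specialize (IHp _ _ _ Hz _ Hk) end.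
      discriminate.
Qed.

(* Rewriting the output of an evaluation; used to leave the output as an
   evar while a program is being evaluated. *)
Lemma eval_eq p X xs y y' : eval p X xs y -> y = y' -> eval p X xs y'.
Proof. intros; subst; auto. Qed.

Lemma b2n_inj a b : b2n a = b2n b -> a = b.
Proof. destruct a, b; simpl; congruence. Qed.

Lemma computes_unique p X A B : computes p X A -> computes p X B -> A = B.
Proof. intros HA HB. extensionality n. apply b2n_inj. eapply eval_det; eauto. Qed.

Definition one := PComp PSucc [PZero].
Definition predP := PPrimRec PZero (PProj 0).
Definition addP := PComp (PPrimRec (PProj 0) (PComp PSucc [PProj 1])) [PProj 1; PProj 0].
Definition subP := PComp (PPrimRec (PProj 0) (PComp predP [PProj 1])) [PProj 1; PProj 0].
Definition mulP := PComp (PPrimRec PZero (PComp addP [PProj 1; PProj 2])) [PProj 1; PProj 0].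
Definition powP := PComp (PPrimRec one (PComp mulP [PProj 1; PProj 2])) [PProj 1; PProj 0].
Definition sgP := PComp subP [one; PComp subP [one; PProj 0]].
Definition nsgP := PComp subP [one; PProj 0].
Definition leP := PComp nsgP [PComp subP [PProj 0; PProj 1]].
Definition ltP := PComp leP [PComp PSucc [PProj 0]; PProj 1].
(* [ifzP a b c] is b if a = 0 and c otherwise. *)
Definition ifzP := PPrimRec (PProj 0) (PProj 3).

Create HintDb evdb.

Ltac ev :=
  match goal with
  | |- eval PZero _ _ _ => apply ev_zero
  | |- eval PSucc _ _ _ => apply ev_succ
  | |- eval (PProj _) _ _ _ => apply ev_proj
  | |- eval POracle _ _ _ => apply ev_oracle
  | |- eval (PComp _ _) _ _ _ => eapply ev_comp; [evl | ev]
  | |- eval _ _ _ _ => first [solve [eauto 1 with evdb] | eassumption]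
  end
with evl :=
  match goal with
  | |- eval_list _ _ _ _ => eassumption
  | |- eval_list [] _ _ _ => apply evl_nil
  | |- eval_list (_ :: _) _ _ _ => eapply evl_cons; [ev | evl]
  end.

Lemma one_ev X xs : eval one X xs 1.
Proof. eapply ev_comp. econstructor. constructor. constructor. constructor. Qed.
#[export] Hint Extern 1 (eval one _ _ _) => apply one_ev : evdb.

Lemma pred_ev X n xs : eval predP X (n :: xs) (Nat.pred n).
Proof. induction n. constructor; constructor. eapply ev_primS. apply IHn. apply ev_proj. Qed.
#[export] Hint Extern 1 (eval predP _ _ _) => apply pred_ev : evdb.

Lemma add_ev X a b : eval addP X [a; b] (a + b).
Proof.
  unfold addP. eapply ev_comp. evl. simpl.
  induction b; simpl. constructor. eapply eval_eq; [apply ev_proj|simpl; lia].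
  econstructor. apply IHb. eapply eval_eq. ev. simpl. lia.
Qed.
#[export] Hint Extern 1 (eval addP _ _ _) => apply add_ev : evdb.

Lemma sub_ev X a b : eval subP X [a; b] (a - b).
Proof.
  unfold subP. eapply ev_comp. evl. simpl.
  induction b; simpl. constructor. eapply eval_eq. apply ev_proj. simpl; lia.
  econstructor. apply IHb. eapply eval_eq. ev. simpl. lia.
Qed.
#[export] Hint Extern 1 (eval subP _ _ _) => apply sub_ev : evdb.

Lemma mul_ev X a b : eval mulP X [a; b] (a * b).
Proof.
  unfold mulP. eapply ev_comp. evl. simpl.
  induction b; simpl. eapply eval_eq. constructor. constructor. lia.
  econstructor. apply IHb. eapply eval_eq. ev. simpl. lia.
Qed.
#[export] Hint Extern 1 (eval mulP _ _ _) => apply mul_ev : evdb.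

Lemma pow_ev X a b : eval powP X [a; b] (a ^ b).
Proof.
  unfold powP. eapply ev_comp. evl. simpl.
  induction b; simpl. constructor. apply one_ev.
  econstructor. apply IHb. eapply eval_eq. ev. simpl. lia.
Qed.
#[export] Hint Extern 1 (eval powP _ _ _) => apply pow_ev : evdb.

Definition sg (n : nat) := match n with 0 => 0 | _ => 1 end.

Lemma sg_le1 n : sg n <= 1.
Proof. destruct n; simpl; lia. Qed.

Lemma sg_ev X a : eval sgP X [a] (sg a).
Proof. eapply eval_eq. unfold sgP. ev. destruct a; simpl; lia. Qed.
#[export] Hint Extern 1 (eval sgP _ _ _) => apply sg_ev : evdb.

Lemma nsg_ev X a : eval nsgP X [a] (1 - a).
Proof. eapply eval_eq. unfold nsgP. ev. simpl; lia. Qed.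
#[export] Hint Extern 1 (eval nsgP _ _ _) => apply nsg_ev : evdb.

Lemma le_ev X a b : eval leP X [a; b] (if a <=? b then 1 else 0).
Proof.
  eapply eval_eq. unfold leP. eapply ev_comp. evl. apply nsg_ev.
  simpl. destruct (Nat.leb_spec a b).
  - replace (a - b) with 0 by lia. reflexivity.
  - replace (a - b) with (S (a - b - 1)) by lia. reflexivity.
Qed.
#[export] Hint Extern 1 (eval leP _ _ _) => apply le_ev : evdb.

Lemma lt_ev X a b : eval ltP X [a; b] (if a <? b then 1 else 0).
Proof. eapply eval_eq. unfold ltP. eapply ev_comp. evl. apply le_ev. reflexivity. Qed.
#[export] Hint Extern 1 (eval ltP _ _ _) => apply lt_ev : evdb.

Lemma ifz_ev X a b c xs : eval ifzP X (a :: b :: c :: xs) (match a with 0 => b | _ => c end).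
Proof. induction a. constructor. apply ev_proj. eapply ev_primS. apply IHa. apply ev_proj. Qed.
#[export] Hint Extern 1 (eval ifzP _ _ _) => apply ifz_ev : evdb.

Lemma prim_ev X f g xs (F : nat) (G : nat -> nat -> nat) :
  eval f X xs F -> (forall k r, eval g X (k :: r :: xs) (G k r)) ->
  forall n, eval (PPrimRec f g) X (n :: xs) (nat_rect (fun _ => nat) F G n).
Proof. intros Hf Hg n; induction n; simpl. constructor; auto. econstructor; eauto. Qed.

Lemma nat_rect_S (F : nat) (G : nat -> nat -> nat) n :
  nat_rect (fun _ => nat) F G (S n) = G n (nat_rect (fun _ => nat) F G n).
Proof. reflexivity. Qed.

(* Division counts the q < a with (q + 1) * b <= a. *)
Definition divP :=
  PComp (PPrimRec PZero (PComp addP [PProj 1; PComp leP [PComp mulP [PComp PSucc [PProj 0]; PProj 3]; PProj 2]]))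
        [PProj 0; PProj 0; PProj 1].

Lemma div_count a b : 0 < b -> forall n,
  nat_rect (fun _ => nat) 0 (fun q acc => acc + (if S q * b <=? a then 1 else 0)) n = Nat.min n (a / b).
Proof.
  intros Hb n; induction n; [reflexivity|]. rewrite nat_rect_S, IHn. cbv beta.
  assert (Hm : b * (a / b) <= a) by (apply Nat.Div0.mul_div_le).
  destruct (Nat.leb_spec (S n * b) a) as [H|H].
  - assert (S n <= a / b) by (apply Nat.div_le_lower_bound; lia). lia.
  - assert (a / b < S n). { destruct (Nat.le_gt_cases (S n) (a / b)); auto. nia. } lia.
Qed.

Lemma div_ev X a b : 0 < b -> eval divP X [a; b] (a / b).
Proof.
  intros Hb. unfold divP. eapply eval_eq. eapply ev_comp. evl.
  apply prim_ev with (G := fun q acc => acc + (if S q * b <=? a then 1 else 0)). constructor.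
  intros k r. eapply eval_eq. ev. reflexivity.
  cbn [nth]. rewrite div_count by auto. apply Nat.min_r. apply Nat.Div0.div_le_upper_bound. nia.
Qed.
#[export] Hint Extern 1 (eval divP _ _ _) => apply div_ev; simpl; lia : evdb.

Definition modP := PComp subP [PProj 0; PComp mulP [PProj 1; divP]].

Lemma mod_ev X a b : 0 < b -> eval modP X [a; b] (a mod b).
Proof. intros Hb. eapply eval_eq. unfold modP. ev. simpl. rewrite Nat.Div0.mod_eq. reflexivity. Qed.
#[export] Hint Extern 1 (eval modP _ _ _) => apply mod_ev; simpl; lia : evdb.

Definition maxP := PComp addP [PProj 0; PComp subP [PProj 1; PProj 0]].

Lemma max_ev X a b : eval maxP X [a; b] (Nat.max a b).
Proof. eapply eval_eq. unfold maxP. ev. simpl. lia. Qed.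
#[export] Hint Extern 1 (eval maxP _ _ _) => apply max_ev : evdb.

Definition constP (n : nat) := nat_rect (fun _ => prog) PZero (fun _ p => PComp PSucc [p]) n.

Lemma const_ev X xs n : eval (constP n) X xs n.
Proof. induction n; simpl. constructor. eapply ev_comp. constructor. exact IHn. constructor. constructor. Qed.
#[export] Hint Extern 1 (eval (constP _) _ _ _) => apply const_ev : evdb.

(* Base-B digit tables: a function f : nat -> nat with values < B, restricted
   to [0, L), is coded by the number [tabsum B L f]; the bits of a finite
   piece of a set, or a finite partial function into bool, are stored this way. *)

Definition digit (B t n : nat) := (t / B ^ n) mod B.
Arguments digit : simpl never.
Definition digitP := PComp modP [PComp divP [PProj 0; PComp powP [PProj 1; PProj 2]]; PProj 1].

Lemma digit_ev X t B n : 0 < B -> eval digitP X [t; B; n] (digit B t n).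
Proof.
  intros HB. unfold digitP. eapply ev_comp. constructor. eapply ev_comp. evl. apply div_ev.
  simpl. apply Nat.neq_0_lt_0, Nat.pow_nonzero. lia.
  constructor. apply ev_proj. constructor. apply mod_ev; auto.
Qed.
#[export] Hint Extern 1 (eval digitP _ _ _) => apply digit_ev; simpl; lia : evdb.

Lemma digit_lt B t n : 0 < B -> digit B t n < B.
Proof. intros; unfold digit. apply Nat.mod_upper_bound. lia. Qed.

Lemma digit_0 B y : digit B 0 y = 0.
Proof. unfold digit. rewrite Nat.Div0.div_0_l. apply Nat.Div0.mod_0_l. Qed.

Lemma digit2_b2n t n : b2n (digit 2 t n =? 1) = digit 2 t n.
Proof. pose proof (digit_lt 2 t n ltac:(lia)). destruct (digit 2 t n) as [|[|]]; simpl; auto; lia. Qed.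

Definition tabsum (B L : nat) (f : nat -> nat) : nat := nat_rect (fun _ => nat) 0 (fun y acc => acc + f y * B ^ y) L.

Lemma tabsum_S B L f : tabsum B (S L) f = tabsum B L f + f L * B ^ L.
Proof. reflexivity. Qed.

Lemma tabsum_lt B L f : 0 < B -> (forall y, f y < B) -> tabsum B L f < B ^ L.
Proof.
  intros HB Hf. induction L. simpl. lia.
  rewrite tabsum_S, Nat.pow_succ_r'. specialize (Hf L).
  assert (f L * B ^ L <= (B - 1) * B ^ L) by (apply Nat.mul_le_mono_r; lia).
  assert ((B - 1) * B ^ L + B ^ L = B * B ^ L) by (destruct B; [lia|]; simpl; rewrite Nat.sub_0_r; lia).
  lia.
Qed.

Lemma tabsum_digit B L f : 1 < B -> (forall y, f y < B) -> forall y, y < L -> digit B (tabsum B L f) y = f y.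
Proof.
  intros HB Hf. induction L; intros y Hy; [lia|]. unfold digit in *. rewrite tabsum_S.
  assert (Hlt := tabsum_lt B L f ltac:(lia) Hf).
  assert (HBy : B ^ y <> 0) by (apply Nat.pow_nonzero; lia).
  destruct (Nat.eq_dec y L).
  - subst. rewrite Nat.div_add by auto. rewrite Nat.div_small by auto. simpl.
    apply Nat.mod_small; auto.
  - replace (f L * B ^ L) with ((f L * B ^ (L - y - 1) * B) * B ^ y).
    2: { rewrite <- !Nat.mul_assoc. f_equal. rewrite <- Nat.pow_succ_r', <- Nat.pow_add_r. f_equal. lia. }
    rewrite Nat.div_add by auto. rewrite Nat.Div0.mod_add. apply IHL. lia.
Qed.

Lemma tabsum_digit_out B L f : 1 < B -> (forall y, f y < B) -> forall y, L <= y -> digit B (tabsum B L f) y = 0.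
Proof.
  intros HB Hf y Hy. unfold digit. rewrite Nat.div_small. apply Nat.Div0.mod_0_l.
  eapply Nat.lt_le_trans. apply tabsum_lt; auto; lia. apply Nat.pow_le_mono_r; lia.
Qed.

(* Cantor pairing: [to_nat (x, y) = y + tri (y + x)] with triangular numbers
   [tri]; the inverse [of_nat] is computed by counting the triangular numbers
   below the argument. *)
Definition tri (s : nat) := nat_rect (fun _ => nat) 0 (fun i m => S i + m) s.
Lemma to_nat_tri x y : to_nat (x, y) = y + tri (y + x).
Proof. reflexivity. Qed.

Definition triP := PComp (PPrimRec PZero (PComp addP [PComp PSucc [PProj 0]; PProj 1])) [PProj 0].
Lemma tri_ev X s : eval triP X [s] (tri s).
Proof. unfold triP. eapply ev_comp. evl. apply prim_ev. constructor. intros; ev. Qed.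
#[export] Hint Extern 1 (eval triP _ _ _) => apply tri_ev : evdb.

Definition tonatP := PComp addP [PProj 1; PComp triP [PComp addP [PProj 1; PProj 0]]].
Lemma tonat_ev X x y : eval tonatP X [x; y] (to_nat (x, y)).
Proof. eapply eval_eq. unfold tonatP. ev. reflexivity. Qed.
#[export] Hint Extern 1 (eval tonatP _ _ _) => apply tonat_ev : evdb.

Lemma tri_S s : tri (S s) = S s + tri s.
Proof. reflexivity. Qed.
Lemma tri_mono a b : a <= b -> tri a <= tri b.
Proof. induction 1; auto. rewrite tri_S. lia. Qed.
Lemma tri_ge s : s <= tri s.
Proof. induction s; auto. rewrite tri_S. lia. Qed.

Definition cntS (n : nat) := nat_rect (fun _ => nat) 0 (fun s acc => acc + (if tri (S s) <=? n then 1 else 0)) (S n).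

Lemma cnt_gen n s0 : tri s0 <= n < tri (S s0) ->
  forall m, nat_rect (fun _ => nat) 0 (fun s acc => acc + (if tri (S s) <=? n then 1 else 0)) m = Nat.min m s0.
Proof.
  intros [H1 H2] m; induction m; [reflexivity|]. rewrite nat_rect_S, IHm. cbv beta.
  destruct (Nat.leb_spec (tri (S m)) n) as [H|H].
  - assert (m < s0).
    { destruct (Nat.lt_ge_cases m s0); auto. assert (tri (S s0) <= tri (S m)) by (apply tri_mono; lia). lia. }
    lia.
  - assert (s0 <= m). { destruct (Nat.lt_ge_cases m s0); auto. assert (tri (S m) <= tri s0) by (apply tri_mono; lia). lia. } lia.
Qed.

Lemma of_nat_cnt n : of_nat n = (cntS n - (n - tri (cntS n)), n - tri (cntS n)).
Proof.
  destruct (of_nat n) as [x y] eqn:E.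
  assert (Hn : to_nat (x, y) = n) by (rewrite <- E; apply cancel_to_of).
  rewrite to_nat_tri in Hn.
  assert (Hc : cntS n = y + x).
  { unfold cntS. rewrite (cnt_gen n (y + x)). apply Nat.min_r. pose proof (tri_ge (y+x)). lia.
    rewrite tri_S. lia. }
  rewrite Hc. f_equal; lia.
Qed.

Definition cntP := PComp (PPrimRec PZero (PComp addP [PProj 1; PComp leP [PComp triP [PComp PSucc [PProj 0]]; PProj 2]]))
                          [PComp PSucc [PProj 0]; PProj 0].
Lemma cnt_ev X n : eval cntP X [n] (cntS n).
Proof.
  unfold cntP. eapply ev_comp. evl. apply prim_ev with (G := fun s acc => acc + (if tri (S s) <=? n then 1 else 0)). constructor.
  intros. eapply eval_eq. ev. reflexivity.
Qed.
#[export] Hint Resolve cnt_ev : evdb.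
Definition sndNP := PComp subP [PProj 0; PComp triP [cntP]].
Definition fstNP := PComp subP [cntP; sndNP].
Lemma sndN_ev X n : eval sndNP X [n] (snd (of_nat n)).
Proof. rewrite of_nat_cnt. simpl. eapply eval_eq. unfold sndNP. ev. reflexivity. Qed.
#[export] Hint Resolve sndN_ev : evdb.
Lemma fstN_ev X n : eval fstNP X [n] (fst (of_nat n)).
Proof. rewrite of_nat_cnt. simpl. eapply eval_eq. unfold fstNP. ev. rewrite of_nat_cnt. reflexivity. Qed.
#[export] Hint Resolve fstN_ev : evdb.

Definition evenP := PComp (PPrimRec one (PComp nsgP [PProj 1])) [PProj 0].
Lemma even_ev X n : eval evenP X [n] (b2n (Nat.even n)).
Proof.
  unfold evenP. eapply ev_comp. evl. simpl. induction n. constructor. apply one_ev.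
  econstructor. apply IHn. eapply eval_eq. ev. cbn [nth]. rewrite Nat.even_succ, <- Nat.negb_even.
  destruct (Nat.even n); reflexivity.
Qed.
Definition div2P := PComp divP [PProj 0; constP 2].
Lemma div2_ev X n : eval div2P X [n] (Nat.div2 n).
Proof. rewrite Nat.div2_div. unfold div2P. ev. Qed.
#[export] Hint Resolve even_ev div2_ev : evdb.

Lemma div2_le n : Nat.div2 n <= n.
Proof. rewrite Nat.div2_div. apply Nat.Div0.div_le_upper_bound. lia. Qed.

Lemma left_join A B : left_part (join A B) = A.
Proof. extensionality x. unfold left_part, join. rewrite Nat.even_even, Nat.div2_double. reflexivity. Qed.

Lemma right_join A B : right_part (join A B) = B.
Proof. extensionality x. unfold right_part, join. rewrite Nat.even_odd, Nat.div2_odd'. reflexivity. Qed.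

(* Fuelled evaluation with a finite partial oracle.  [seval p F O xs] runs p
   on xs, where O : nat -> option bool answers oracle queries (None = unknown)
   and every unbounded search is cut off after F candidates.  It is a total
   function, and it is what the final programs simulate.  Completeness (the use principle): every terminating
   computation is reproduced by [seval] for all sufficiently large fuel and
   all partial oracles agreeing with X on a sufficiently long initial segment. *)

Fixpoint map_option {A B} (h : A -> option B) (l : list A) : option (list B) :=
  match l with
  | [] => Some []
  | a :: l' => match h a with
               | Some b => match map_option h l' with Some bs => Some (b :: bs) | None => None end
               | None => None end
  end.

(* Bounded mu-search as a state machine on nat: state 0 = still searching,
   1 = aborted (a candidate diverged), v + 2 = found the least zero v. *)
Definition mu_result (s : nat) : option nat := match s with S (S v) => Some v | _ => None end.
Definition mu_step (h : nat -> option nat) (c s : nat) : nat :=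
  match s with
  | 0 => match h c with None => 1 | Some 0 => S (S c) | Some (S _) => 0 end
  | _ => s end.
Definition mu_state (h : nat -> option nat) (F : nat) : nat := nat_rect (fun _ => nat) 0 (mu_step h) F.

Fixpoint seval (p : prog) (F : nat) (O : nat -> option bool) (xs : list nat) {struct p} : option nat :=
  match p with
  | PZero => Some 0
  | PSucc => Some (S (nth 0 xs 0))
  | PProj i => Some (nth i xs 0)
  | POracle => match O (nth 0 xs 0) with Some b => Some (b2n b) | None => None end
  | PComp f gs => match map_option (fun g => seval g F O xs) gs with
                  | Some ys => seval f F O ys | None => None end
  | PPrimRec f g => match xs with
                    | [] => None
                    | n :: xs' => nat_rect (fun _ => option nat) (seval f F O xs')
                        (fun k r => match r with Some r => seval g F O (k :: r :: xs') | None => None end) n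
                    end
  | PMu f => mu_result (mu_state (fun c => seval f F O (c :: xs)) F)
  end.

Lemma mu_state_S h c : mu_state h (S c) = mu_step h c (mu_state h c).
Proof. reflexivity. Qed.

Lemma mu_state_inv h : forall c,
  (mu_state h c = 0 -> forall m, m < c -> exists k, h m = Some (S k)) /\
  (forall v, mu_state h c = S (S v) -> v < c /\ h v = Some 0 /\ forall m, m < v -> exists k, h m = Some (S k)).
Proof.
  induction c.
  - simpl. split; intros; [lia | congruence].
  - destruct IHc as [A B]. rewrite mu_state_S.
    destruct (mu_state h c) as [|[|s]] eqn:E; unfold mu_step.
    + destruct (h c) as [[|k]|] eqn:Hc.
      * split; [intros; congruence|]. intros v Hv. injection Hv; intros; subst. split; [lia|]. split; auto.
      * split; [|intros; congruence]. intros _ m Hm. destruct (Nat.eq_dec m c); [subst; eauto|]. apply A; auto; lia.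
      * split; intros; congruence.
    + split; intros; congruence.
    + split; [intros; congruence|]. intros v Hv. injection Hv; intros; subst.
      destruct (B v eq_refl) as [H1 [H2 H3]]. split; [lia|]; auto.
Qed.

Lemma mu_state_val h v : (forall m, m < v -> exists k, h m = Some (S k)) -> h v = Some 0 ->
  forall c, mu_state h c = if c <=? v then 0 else S (S v).
Proof.
  intros H1 H2. induction c; [reflexivity|].
  rewrite mu_state_S, IHc. unfold mu_step.
  destruct (Nat.leb_spec c v).
  - destruct (Nat.eq_dec c v).
    + subst. rewrite H2. destruct (Nat.leb_spec (S v) v); [lia|reflexivity].
    + destruct (H1 c) as [k Hk]; [lia|]. rewrite Hk. destruct (Nat.leb_spec (S c) v); [reflexivity|lia].
  - destruct (Nat.leb_spec (S c) v); [lia|reflexivity].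
Qed.

Definition consistent (O : nat -> option bool) (X : cset) := forall n b, O n = Some b -> X n = b.

Lemma seval_sound : forall p F O xs y, seval p F O xs = Some y -> forall X, consistent O X -> eval p X xs y.
Proof.
  intro p; induction p using prog_nested_ind; intros F O xs y Hs X HX; simpl in Hs.
  - injection Hs; intros; subst; constructor.
  - injection Hs; intros; subst; constructor.
  - injection Hs; intros; subst; constructor.
  - destruct (O (nth 0 xs 0)) eqn:E; [|discriminate]. injection Hs; intros; subst.
    rewrite <- (HX _ _ E). constructor.
  - destruct (map_option (fun g => seval g F O xs) gs) as [ys|] eqn:E; [|discriminate].
    econstructor; [|eauto].
    clear Hs. revert ys E. induction H; intros ys E; simpl in E.
    + injection E; intros; subst; constructor.
    + destruct (seval x F O xs) eqn:E1; [|discriminate].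
      destruct (map_option (fun g => seval g F O xs) l) eqn:E2; [|discriminate].
      injection E; intros; subst. constructor; eauto.
  - destruct xs as [|n xs']; [discriminate|]. revert y Hs. induction n; simpl; intros y Hs.
    + constructor; eauto.
    + destruct (nat_rect _ _ _ n) as [r|] eqn:E; [|discriminate].
      econstructor; eauto.
  - destruct (mu_state (fun c => seval p F O (c :: xs)) F) as [|[|v]] eqn:E; try discriminate.
    simpl in Hs; injection Hs; intros; subst.
    destruct (mu_state_inv (fun c => seval p F O (c :: xs)) F) as [_ B].
    destruct (B _ E) as [_ [H2 H3]].
    constructor; eauto.
    intros m Hm. destruct (H3 m Hm) as [k Hk]. exists k; eauto.
Qed.

Definition stable p X xs y F0 L :=
  forall F O, F0 <= F -> (forall n, n < L -> O n = Some (X n)) -> seval p F O xs = Some y.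

Lemma stable_mono p X xs y F0 L F1 L1 : stable p X xs y F0 L -> F0 <= F1 -> L <= L1 -> stable p X xs y F1 L1.
Proof. unfold stable; intros H A B F O C D. apply H; [lia|]. intros; apply D; lia. Qed.

Lemma common_bound (Q : nat -> nat -> nat -> Prop) :
  (forall m F0 L F1 L1, Q m F0 L -> F0 <= F1 -> L <= L1 -> Q m F1 L1) ->
  forall n, (forall m, m < n -> exists F L, Q m F L) -> exists F L, forall m, m < n -> Q m F L.
Proof.
  intros Hm n. induction n; intros H.
  - exists 0, 0; intros; lia.
  - destruct IHn as [F [L HF]]. intros; apply H; lia.
    destruct (H n) as [F' [L' HF']]; [lia|].
    exists (Nat.max F F'), (Nat.max L L'). intros m Hm'.
    destruct (Nat.eq_dec m n); [subst; eapply Hm; eauto; lia|]. eapply Hm; [apply HF; lia| lia | lia].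
Qed.

Lemma stable_args gs X xs ys :
  Forall (fun g => forall X xs y, eval g X xs y -> exists F0 L, stable g X xs y F0 L) gs ->
  eval_list gs X xs ys ->
  exists F0 L, forall F O, F0 <= F -> (forall n, n < L -> O n = Some (X n)) ->
    map_option (fun g => seval g F O xs) gs = Some ys.
Proof.
  intros Hgs Hl. induction Hl as [|g gs X xs y ys Hg Hl IH].
  - exists 0, 0; intros; reflexivity.
  - inversion Hgs as [|? ? Hg' Hgs']; subst. destruct (Hg' _ _ _ Hg) as [Fa [La Ga]].
    destruct (IH Hgs') as [Fb [Lb Gb]].
    exists (Nat.max Fa Fb), (Nat.max La Lb). intros F O HF HO. simpl.
    rewrite (Ga F O) by (try lia; intros; apply HO; lia).
    rewrite (Gb F O) by (try lia; intros; apply HO; lia). reflexivity.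
Qed.

Lemma stable_primrec f g X :
  (forall xs y, eval f X xs y -> exists F0 L, stable f X xs y F0 L) ->
  (forall xs y, eval g X xs y -> exists F0 L, stable g X xs y F0 L) ->
  forall k xs y, eval (PPrimRec f g) X (k :: xs) y -> exists F0 L, stable (PPrimRec f g) X (k :: xs) y F0 L.
Proof.
  intros IHf IHg k; induction k; intros xs y E; inversion E; subst.
  - match goal with Hf : eval f _ _ _ |- _ => destruct (IHf _ _ Hf) as [F1 [L1 G1]] end.
    exists F1, L1. intros F O HF HO. simpl. apply G1; auto.
  - match goal with Hf : eval (PPrimRec _ _) _ _ _ |- _ => destruct (IHk _ _ Hf) as [F1 [L1 G1]] end.
    match goal with Hg : eval g _ _ _ |- _ => destruct (IHg _ _ Hg) as [F2 [L2 G2]] end.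
    exists (Nat.max F1 F2), (Nat.max L1 L2). intros F O HF HO. simpl.
    specialize (G1 F O). simpl in G1. rewrite G1 by (try lia; intros; apply HO; lia).
    apply G2; [lia|intros; apply HO; lia].
Qed.

Lemma seval_complete : forall p X xs y, eval p X xs y -> exists F0 L, stable p X xs y F0 L.
Proof.
  intro p; induction p using prog_nested_ind; intros X xs y Hev.
  - inversion Hev; subst. exists 0, 0; intros F O _ _; reflexivity.
  - inversion Hev; subst. exists 0, 0; intros F O _ _; reflexivity.
  - inversion Hev; subst. exists 0, 0; intros F O _ _; reflexivity.
  - inversion Hev; subst. exists 0, (S (nth 0 xs 0)); intros F O _ HO. simpl. rewrite HO by lia. reflexivity.
  - inversion Hev as [| | | |? ? ? ? ys ? Hl Hf| | |]; subst.
    destruct (IHp _ _ _ Hf) as [F1 [L1 G1]].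
    destruct (stable_args gs X xs ys H Hl) as [F2 [L2 G2]].
    exists (Nat.max F1 F2), (Nat.max L1 L2). intros F' O HF HO. simpl.
    rewrite (G2 F' O) by (try lia; intros; apply HO; lia). apply G1; [lia|intros; apply HO; lia].
  - destruct xs as [|k xs]; [inversion Hev|].
    apply stable_primrec; auto.
  - inversion Hev as [| | | | | | |? ? ? ? Hzero Hpos]; subst. rename y into v.
    destruct (IHp _ _ _ Hzero) as [F1 [L1 G1]].
    destruct (common_bound (fun m F L => exists k, stable p X (m :: xs) (S k) F L)) with (n := v) as [F2 [L2 G2]].
    { intros m a b c d [k Hk] e f. exists k. eapply stable_mono; eauto. }
    { intros m Hm. destruct (Hpos m Hm) as [k Hk]. destruct (IHp _ _ _ Hk) as [F [L G]]. eauto. }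
    exists (Nat.max (S v) (Nat.max F1 F2)), (Nat.max L1 L2). intros F O HF HO. simpl.
    rewrite (mu_state_val _ v).
    + destruct (Nat.leb_spec F v); [lia|reflexivity].
    + intros m Hm. destruct (G2 m Hm) as [k Gk]. exists k. apply Gk; [lia|intros; apply HO; lia].
    + apply G1; [lia|intros; apply HO; lia].
Qed.

(* Given a program [oprog] that, on parameters ps (a list
   of length K whose head is a fuel bound) and a query n, computes the answer
   [orc X ps n] of a partial oracle (coded by [ocode]), [relativize p l] is a
   program which on ps ++ xs (with xs of length l) computes
   [seval p (hd ps) (orc X ps) xs], coded by [oenc].  Thus simulated runs
   of p against finite oracles computed from numeric data are themselves
   programs; this is how the final functionals run Phi, Theta and Psi on
   finite approximations of their inputs. *)

Definition ocode (o : option bool) := match o with None => 0 | Some b => S (b2n b) end.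
Definition oenc (o : option nat) := match o with None => 0 | Some v => S v end.

Lemma evl_projs X zs l : eval_list (map PProj l) X zs (map (fun i => nth i zs 0) l).
Proof. induction l; simpl; constructor; auto. apply ev_proj. Qed.

Lemma map_nth_seq : forall (v u w : list nat), map (fun i => nth i (u ++ v ++ w) 0) (seq (length u) (length v)) = v.
Proof.
  induction v as [|a v IH]; intros u w; simpl; auto.
  rewrite app_nth2 by lia. rewrite Nat.sub_diag. simpl. f_equal.
  specialize (IH (u ++ [a]) w). rewrite length_app in IH. simpl in IH.
  rewrite <- app_assoc in IH. simpl in IH. rewrite Nat.add_1_r in IH. exact IH.
Qed.

Lemma evl_app X xs l1 l2 ys1 ys2 : eval_list l1 X xs ys1 -> eval_list l2 X xs ys2 -> eval_list (l1 ++ l2) X xs (ys1 ++ ys2).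
Proof. induction 1; simpl; auto. intros; constructor; auto. Qed.

(* [prodsg ts] is 1 if all the ts return nonzero codes and 0 otherwise: a
   composition succeeds iff all its (compiled) arguments succeed. *)
Definition prodsg (ts : list prog) := fold_right (fun t acc => PComp mulP [PComp sgP [t]; acc]) one ts.
Definition prodv (cs : list nat) := fold_right (fun c acc => sg c * acc) 1 cs.

Lemma prodsg_ev X zs ts cs : eval_list ts X zs cs -> eval (prodsg ts) X zs (prodv cs).
Proof. induction 1; simpl. apply one_ev. ev. Qed.

Lemma predmap_ev X zs ts cs : eval_list ts X zs cs -> eval_list (map (fun t => PComp predP [t]) ts) X zs (map Nat.pred cs).
Proof. induction 1; simpl; constructor; auto. ev. Qed.

Lemma map_option_some {A} (h : A -> option nat) gs ys : map_option h gs = Some ys -> map (fun g => oenc (h g)) gs = map S ys.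
Proof.
  revert ys; induction gs; simpl; intros ys E. injection E; intros; subst; auto.
  destruct (h a); [|discriminate]. destruct (map_option h gs); [|discriminate]. injection E; intros; subst.
  simpl. f_equal; auto.
Qed.

Lemma map_option_none {A} (h : A -> option nat) gs : map_option h gs = None -> prodv (map (fun g => oenc (h g)) gs) = 0.
Proof.
  induction gs; simpl; intros E. discriminate.
  destruct (h a); simpl; auto. destruct (map_option h gs); [discriminate|]. rewrite IHgs; auto; lia.
Qed.

Lemma prodv_S ys : prodv (map S ys) = 1.
Proof. induction ys; simpl; auto; lia. Qed.

Lemma map_pred_S ys : map Nat.pred (map S ys) = ys.
Proof. induction ys; simpl; f_equal; auto. Qed.

Section Relativize.
Variable K : nat.
Variable oprog : prog.
Variable orc : cset -> list nat -> nat -> option bool.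
Hypothesis HK : 0 < K.
Hypothesis Horc : forall X ps n, length ps = K -> eval oprog X (ps ++ [n]) (ocode (orc X ps n)).

Definition params := map PProj (seq 0 K).

(* Call the compiled step function q of a primitive recursion on the
   arguments k :: acc :: ps ++ xs; the accumulator acc codes an option,
   and a failed accumulator (acc = 0) makes the result fail. *)
Definition primrec_step (q : prog) (l : nat) :=
  PComp mulP [PComp sgP [PProj 1];
              PComp q (map PProj (seq 2 K) ++ [PProj 0; PComp predP [PProj 1]] ++ map PProj (seq (K + 2) l))].

(* Call the compiled body q of a search on c :: state :: ps ++ xs. *)
Definition mu_body (q : prog) (l : nat) :=
  PComp q (map PProj (seq 2 K) ++ [PProj 0] ++ map PProj (seq (K + 2) l)).

Definition mu_loop (e : prog) :=
  PPrimRec PZero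
    (PComp ifzP [PProj 1;
                 PComp ifzP [e; one; PComp ifzP [PComp predP [e]; PComp PSucc [PComp PSucc [PProj 0]]; PZero]];
                 PProj 1]).

Fixpoint relativize (p : prog) (l : nat) : prog :=
  match p with
  | PZero => PComp PSucc [PZero]
  | PSucc => PComp PSucc [PComp PSucc [PProj K]]
  | PProj i => PComp PSucc [PProj (K + i)]
  | POracle => PComp oprog (params ++ [PProj K])
  | PComp f gs =>
      PComp mulP [prodsg (map (fun g => relativize g l) gs);
                  PComp (relativize f (length gs))
                        (params ++ map (fun t => PComp predP [t]) (map (fun g => relativize g l) gs))]
  | PPrimRec f g =>
      match l with
      | 0 => PZero
      | S l' => PComp (PPrimRec (relativize f l') (primrec_step (relativize g (S (S l'))) l'))
                      (PProj K :: params ++ map PProj (seq (S K) l'))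
      end
  | PMu f =>
      PComp subP [PComp (mu_loop (mu_body (relativize f (S l)) l)) (PProj 0 :: params ++ map PProj (seq K l));
                  one]
  end.

Lemma evl_block X u v w n m : n = length u -> m = length v ->
  eval_list (map PProj (seq n m)) X (u ++ v ++ w) v.
Proof. intros -> ->. eapply eq_ind; [apply evl_projs|]. apply map_nth_seq. Qed.

Lemma evl_suffix X u v n m : n = length u -> m = length v ->
  eval_list (map PProj (seq n m)) X (u ++ v) v.
Proof. intros Hn Hm. rewrite <- (app_nil_r v) at 1. apply evl_block; auto. Qed.

Lemma params_ev X ps xs : length ps = K -> eval_list params X (ps ++ xs) ps.
Proof. intros Hl. apply (evl_block X [] ps xs); auto. Qed.

Lemma primrec_args_ev X ps n xs : length ps = K ->
  eval_list (PProj K :: params ++ map PProj (seq (S K) (length xs))) X (ps ++ n :: xs) (n :: ps ++ xs).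
Proof.
  intros Hps. constructor.
  - eapply eval_eq; [apply ev_proj|]. rewrite app_nth2 by lia. rewrite Hps, Nat.sub_diag. reflexivity.
  - apply evl_app; [apply params_ev; auto|].
    replace (ps ++ n :: xs) with ((ps ++ [n]) ++ xs) by (rewrite <- app_assoc; reflexivity).
    apply evl_suffix; [rewrite length_app, Hps; simpl; lia | reflexivity].
Qed.

Lemma primrec_loop_ev (qf qg : prog) (hf : option nat) (hg : nat -> nat -> option nat) X ps xs :
  length ps = K -> eval qf X (ps ++ xs) (oenc hf) ->
  (forall k r, eval qg X (ps ++ k :: r :: xs) (oenc (hg k r))) ->
  forall n, eval (PPrimRec qf (primrec_step qg (length xs))) X (n :: ps ++ xs)
    (oenc (nat_rect (fun _ => option nat) hf
             (fun k r => match r with Some r => hg k r | None => None end) n)).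
Proof.
  intros Hps Hf Hg n. induction n as [|n IHn]; [constructor; exact Hf|].
  eapply ev_primS; [exact IHn|]. set (acc := nat_rect _ _ _ n).
  unfold primrec_step. eapply eval_eq. eapply ev_comp.
  - constructor; [ev|]. constructor; [|constructor]. eapply ev_comp; [|apply Hg].
    apply evl_app; [apply (evl_block X [n; oenc acc] ps xs); auto|].
    apply (evl_app X _ [PProj 0; PComp predP [PProj 1]] _ [n; Nat.pred (oenc acc)] xs).
    + constructor; [apply ev_proj|]. constructor; [ev|constructor].
    + apply (evl_suffix X (n :: oenc acc :: ps) xs); simpl; lia.
  - apply mul_ev.
  - change (sg (oenc acc) * oenc (hg n (Nat.pred (oenc acc)))
            = oenc (match acc with Some r => hg n r | None => None end)).
    destruct acc; simpl; lia.
Qed.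

Lemma mu_args_ev X ps xs : length ps = K ->
  eval_list (PProj 0 :: params ++ map PProj (seq K (length xs))) X (ps ++ xs) (nth 0 ps 0 :: ps ++ xs).
Proof.
  intros Hps. constructor.
  - eapply eval_eq; [apply ev_proj|]. rewrite app_nth1 by lia. reflexivity.
  - apply evl_app; [apply params_ev; auto | apply evl_suffix; auto].
Qed.

Lemma mu_loop_ev (q : prog) (h : nat -> option nat) X ps xs : length ps = K ->
  (forall c, eval q X (ps ++ c :: xs) (oenc (h c))) ->
  forall c, eval (mu_loop (mu_body q (length xs))) X (c :: ps ++ xs) (mu_state h c).
Proof.
  intros Hps Hq c. induction c as [|c IHc]; [constructor; constructor|].
  eapply ev_primS; [exact IHc|]. rewrite mu_state_S.
  assert (He : eval (mu_body q (length xs)) X (c :: mu_state h c :: ps ++ xs) (oenc (h c))).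
  { eapply ev_comp; [|apply Hq].
    apply evl_app; [apply (evl_block X [c; mu_state h c] ps xs); auto|].
    apply (evl_app X _ [PProj 0] _ [c] xs); [constructor; [apply ev_proj|constructor]|].
    apply (evl_suffix X (c :: mu_state h c :: ps) xs); simpl; lia. }
  eapply eval_eq. ev. simpl. unfold mu_step. destruct (mu_state h c); [|reflexivity].
  destruct (h c) as [[|k]|]; reflexivity.
Qed.

Lemma relativize_correct : forall p l X ps xs, length ps = K -> length xs = l ->
  eval (relativize p l) X (ps ++ xs) (oenc (seval p (nth 0 ps 0) (orc X ps) xs)).
Proof.
  intro p; induction p using prog_nested_ind; intros l X ps xs Hps Hxs; simpl.
  - ev.
  - eapply eval_eq. ev. simpl. rewrite app_nth2 by lia. rewrite Hps, Nat.sub_diag. reflexivity.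
  - eapply eval_eq. ev. simpl. rewrite app_nth2 by lia. rewrite Hps. replace (K + i - K) with i by lia; reflexivity.
  - eapply eval_eq. eapply ev_comp. eapply evl_app. apply params_ev; auto. evl.
    apply Horc; auto. rewrite app_nth2 by lia. rewrite Hps, Nat.sub_diag.
    destruct (orc X ps (nth 0 xs 0)); reflexivity.
  - set (F := nth 0 ps 0). set (O := orc X ps).
    assert (HL : eval_list (map (fun g => relativize g l) gs) X (ps ++ xs) (map (fun g => oenc (seval g F O xs)) gs)).
    { clear IHp. induction H; simpl; constructor; auto. }
    eapply ev_comp. constructor. apply prodsg_ev, HL. constructor.
    eapply ev_comp. eapply evl_app. apply params_ev; auto. apply predmap_ev, HL.
    apply IHp; auto. rewrite length_map, length_map. reflexivity.
    constructor. eapply eval_eq. apply mul_ev. simpl.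
    destruct (map_option (fun g => seval g F O xs) gs) as [ys|] eqn:E.
    + rewrite (map_option_some _ _ _ E), prodv_S, map_pred_S, Nat.mul_1_l. reflexivity.
    + rewrite (map_option_none _ _ E). reflexivity.
  - destruct xs as [|n xs']; simpl in Hxs; subst l; [constructor|].
    eapply ev_comp; [apply primrec_args_ev; auto|].
    apply primrec_loop_ev; auto.
  - subst l. eapply ev_comp.
    + constructor; [|constructor; [apply one_ev|constructor]].
      eapply ev_comp; [apply mu_args_ev; auto|].
      apply (mu_loop_ev _ (fun c => seval p (nth 0 ps 0) (orc X ps) (c :: xs))); auto.
    + eapply eval_eq. apply sub_ev. simpl.
      destruct (mu_state (fun c => seval p (nth 0 ps 0) (orc X ps) (c :: xs)) (nth 0 ps 0)) as [|[|v]];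
        reflexivity.
Qed.
End Relativize.

Definition prodn (f : nat -> nat) (n : nat) := nat_rect (fun _ => nat) 1 (fun i acc => acc * f i) n.
Lemma prodn_le1 f n : (forall i, f i <= 1) -> prodn f n <= 1.
Proof. intros H; induction n; simpl; auto. specialize (H n). nia. Qed.
Lemma prodn_one f n : (forall i, f i <= 1) -> (prodn f n = 1 <-> forall i, i < n -> f i = 1).
Proof.
  intros H; induction n; simpl. split; intros; auto; lia.
  pose proof (H n). pose proof (prodn_le1 f n H).
  split.
  - intros E i Hi. assert (prodn f n = 1 /\ f n = 1) as [A B] by (unfold prodn in *; nia).
    destruct (Nat.eq_dec i n); [subst; auto|]. apply IHn; auto; lia.
  - intros A. assert (prodn f n = 1) by (apply IHn; intros; apply A; lia). unfold prodn in *. rewrite H2, A; lia.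
Qed.

Definition maxn (f : nat -> nat) (n : nat) := nat_rect (fun _ => nat) 0 (fun i acc => Nat.max acc (f i)) n.
Lemma maxn_ge f n i : i < n -> f i <= maxn f n.
Proof. induction n; intros Hi; [lia|]. change (maxn f (S n)) with (Nat.max (maxn f n) (f n)).
  destruct (Nat.eq_dec i n); [subst; apply Nat.le_max_r|]. specialize (IHn ltac:(lia)).
  eapply Nat.le_trans; [exact IHn| apply Nat.le_max_l]. Qed.

Fixpoint lfind (P : nat -> bool) (c fuel : nat) : nat :=
  match fuel with 0 => c | S f => if P c then c else lfind P (S c) f end.
Lemma lfind_spec P : forall fuel c, (exists m, c <= m /\ m < c + fuel /\ P m = true) ->
  P (lfind P c fuel) = true /\ c <= lfind P c fuel /\ forall m, c <= m -> m < lfind P c fuel -> P m = false.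
Proof.
  induction fuel; intros c [m [H1 [H2 H3]]]; [lia|]. simpl.
  destruct (P c) eqn:E. split; auto. split; auto. intros; lia.
  destruct (IHfuel (S c)) as [A [B C]].
  { exists m. destruct (Nat.eq_dec c m); [subst; congruence|]. repeat split; auto; lia. }
  split; auto. split; [lia|]. intros m' Hm1 Hm2. destruct (Nat.eq_dec c m'); [subst; auto|]. apply C; lia.
Qed.

Lemma nth_map_seq {A} (f : nat -> A) N n d : n < N -> nth n (map f (seq 0 N)) d = f n.
Proof. intros H. rewrite nth_indep with (d' := f 0) by (rewrite length_map, length_seq; lia).
  rewrite map_nth, seq_nth by lia. reflexivity. Qed.

(* For a program Phi total on
   Cantor space, [modulus x] is the least c such that, for every table of c
   bits used as partial oracle, the run of Phi with fuel c converges on all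
   inputs <= x.  It exists by the fan theorem (compactness of 2^omega), and
   the property "c is such a bound" is decidable, so the least one is
   computable. *)
Section Modulus.
Variable Phi : prog.
Hypothesis Phi_total : forall Z, exists B, computes Phi Z B.

Definition bit_oracle (t c : nat) (n : nat) : option bool := if n <? c then Some (digit 2 t n =? 1) else None.
Definition conv_table c t x := prodn (fun x' => sg (oenc (seval Phi c (bit_oracle t c) [x']))) (S x).
Definition conv_all c x := prodn (fun t => conv_table c t x) (2 ^ c).

Lemma conv_table_le1 c t x : conv_table c t x <= 1. Proof. apply prodn_le1. intros; apply sg_le1. Qed.

Lemma conv_all_spec c x : conv_all c x = 1 <-> forall t x', t < 2 ^ c -> x' <= x -> seval Phi c (bit_oracle t c) [x'] <> None.
Proof.
  unfold conv_all. rewrite prodn_one by (intros; apply conv_table_le1). split.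
  - intros H t x' Ht Hx. specialize (H t Ht). unfold conv_table in H. rewrite prodn_one in H by (intros; apply sg_le1).
    specialize (H x' ltac:(lia)). destruct (seval Phi c (bit_oracle t c) [x']); simpl in H; congruence.
  - intros H t Ht. unfold conv_table. rewrite prodn_one by (intros; apply sg_le1). intros x' Hx.
    specialize (H t x' Ht ltac:(lia)). destruct (seval Phi c (bit_oracle t c) [x']); simpl; congruence.
Qed.

Lemma conv_all_le1 c x : conv_all c x <= 1. Proof. apply prodn_le1. intros; apply conv_table_le1. Qed.

(* Every infinite
   path has a secure initial segment; by Koenig's lemma (for the tree of
   paths with insecure extensions of every length) some length makes all
   paths secure. *)
Section Fan.
Variable x : nat.
Definition secure (s : list bool) := forall F O, length s <= F -> (forall n, n < length s -> O n = Some (nth n s false)) ->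
   forall x', x' <= x -> seval Phi F O [x'] <> None.

Lemma secure_app s t : secure s -> secure (s ++ t).
Proof.
  intros H F O HF HO. apply H. rewrite length_app in HF; lia.
  intros n Hn. rewrite HO by (rewrite length_app; lia). rewrite app_nth1 by auto. auto.
Qed.

(* By the use principle, since Phi(X) is total. *)
Lemma path_secure (X : cset) : exists L, secure (map X (seq 0 L)).
Proof.
  destruct (Phi_total X) as [B HB].
  destruct (common_bound (fun m F L => stable Phi X [m] (b2n (B m)) F L)) with (n := S x) as [F [L H]].
  { intros; eapply stable_mono; eauto. }
  { intros m _. apply seval_complete. apply HB. }
  exists (Nat.max F L). intros F' O HF HO x' Hx. rewrite length_map, length_seq in HF.
  rewrite (H x' ltac:(lia) F' O) by (try lia; intros n Hn; rewrite HO by (rewrite length_map, length_seq; lia);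
     rewrite nth_map_seq by lia; reflexivity). discriminate.
Qed.

Definition unsecured (s : list bool) := forall N, exists t, length t = N /\ ~ secure (s ++ t).

Lemma unsecured_step s : unsecured s -> unsecured (s ++ [false]) \/ unsecured (s ++ [true]).
Proof.
  intros H. apply NNPP. intros Hn. apply not_or_and in Hn. destruct Hn as [H0 H1].
  unfold unsecured in H0, H1. apply not_all_ex_not in H0. apply not_all_ex_not in H1.
  destruct H0 as [N0 H0]. destruct H1 as [N1 H1].
  destruct (H (S (Nat.max N0 N1))) as [t [Ht Hg]]. destruct t as [|b t']; [simpl in Ht; lia|].
  simpl in Ht.
  assert (forall (b : bool) N, ~ (exists t, length t = N /\ ~ secure ((s ++ [b]) ++ t)) ->
            N <= length t' -> secure (s ++ b :: t')) as key.
  { intros b0 N Hn HN. rewrite <- (firstn_skipn N t').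
    replace (s ++ b0 :: firstn N t' ++ skipn N t') with (((s ++ [b0]) ++ firstn N t') ++ skipn N t')
      by (rewrite <- !app_assoc; reflexivity).
    apply secure_app. apply NNPP. intros Hng. apply Hn. exists (firstn N t'). split; auto.
    rewrite length_firstn. lia. }
  destruct b; [apply Hg, (key true N1); auto; lia | apply Hg, (key false N0); auto; lia].
Qed.

(* The leftmost infinite branch through the unsecured nodes. *)
Definition next_bit (s : list bool) : bool :=
  if excluded_middle_informative (unsecured (s ++ [false])) then false else true.

Fixpoint bad_path (n : nat) : list bool :=
  match n with 0 => [] | S n' => bad_path n' ++ [next_bit (bad_path n')] end.

Lemma bad_path_len n : length (bad_path n) = n.
Proof. induction n; simpl; auto. rewrite length_app; simpl; lia. Qed.

Lemma bad_path_unsecured : unsecured [] -> forall n, unsecured (bad_path n).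
Proof.
  intros H0 n; induction n; simpl; auto. unfold next_bit.
  destruct (excluded_middle_informative (unsecured (bad_path n ++ [false]))); auto.
  destruct (unsecured_step _ IHn); tauto.
Qed.

Lemma bad_path_prefix n m : n <= m -> exists t, bad_path m = bad_path n ++ t.
Proof.
  induction 1 as [|m _ [t E]]; [exists []; rewrite app_nil_r; auto|].
  exists (t ++ [next_bit (bad_path m)]). simpl. rewrite E, app_assoc. auto.
Qed.

Lemma fan_bound : exists N, forall s, length s = N -> secure s.
Proof.
  apply NNPP. intros Hno.
  assert (E0 : unsecured []).
  { intros N. apply NNPP. intros H. apply Hno. exists N. intros s Hs. apply NNPP. intros Hg. apply H. exists s. auto. }
  set (X := fun n => nth n (bad_path (S n)) false).
  destruct (path_secure X) as [L HL].
  assert (map X (seq 0 L) = bad_path L).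
  { apply nth_ext with (d := false) (d' := false). rewrite length_map, length_seq, bad_path_len; auto.
    intros n Hn. rewrite length_map, length_seq in Hn.
    rewrite nth_map_seq by lia. unfold X. destruct (bad_path_prefix (S n) L ltac:(lia)) as [t Et].
    rewrite Et. rewrite app_nth1; auto. rewrite bad_path_len; lia. }
  rewrite H in HL. destruct (bad_path_unsecured E0 L 0) as [t [Ht Hg]]. destruct t; [|simpl in Ht; lia].
  rewrite app_nil_r in Hg. auto.
Qed.
End Fan.

(* A table of N bits is a path of length N. *)
Lemma modulus_exists x : exists c, conv_all c x = 1.
Proof.
  destruct (fan_bound x) as [N HN]. exists N. apply conv_all_spec. intros t x' Ht Hx.
  apply (HN (map (fun n => digit 2 t n =? 1) (seq 0 N))). rewrite length_map, length_seq; auto.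
  rewrite length_map, length_seq; auto.
  intros n Hn. rewrite length_map, length_seq in Hn. unfold bit_oracle. destruct (Nat.ltb_spec n N); [|lia].
  rewrite nth_map_seq by lia. reflexivity. auto.
Qed.

(* The least bound, found by a bounded search below some bound. *)
Definition modulus (x : nat) : nat :=
  let c0 := proj1_sig (constructive_indefinite_description _ (modulus_exists x)) in
  lfind (fun c => conv_all c x =? 1) 0 (S c0).

Lemma modulus_spec x : conv_all (modulus x) x = 1 /\ forall m, m < modulus x -> conv_all m x = 0.
Proof.
  unfold modulus. destruct (constructive_indefinite_description _ (modulus_exists x)) as [c0 H0]. simpl.
  destruct (lfind_spec (fun c => conv_all c x =? 1) (S c0) 0) as [A [_ C]].
  exists c0. split; [lia|]. split; [lia|]. apply Nat.eqb_eq; auto.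
  apply Nat.eqb_eq in A. split; auto. intros m Hm. specialize (C m ltac:(lia) Hm). apply Nat.eqb_neq in C.
  pose proof (conv_all_le1 m x). lia.
Qed.

(* Any partial oracle defined exactly below [modulus x] is one of the tables. *)
Lemma modulus_converges x O : (forall n, n < modulus x -> exists b, O n = Some b) -> (forall n, modulus x <= n -> O n = None) ->
  forall x', x' <= x -> seval Phi (modulus x) O [x'] <> None.
Proof.
  intros H1 H2 x' Hx. set (c := modulus x) in *.
  set (f := fun n => match O n with Some true => 1 | _ => 0 end).
  set (t := tabsum 2 c f).
  assert (Hf : forall y, f y < 2) by (intros; unfold f; destruct (O y) as [[]|]; lia).
  assert (O = bit_oracle t c).
  { extensionality n. unfold bit_oracle. destruct (Nat.ltb_spec n c).
    - destruct (H1 n H) as [b Hb]. rewrite Hb. unfold t. rewrite tabsum_digit by auto. unfold f. rewrite Hb. destruct b; auto.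
    - apply H2; auto. }
  rewrite H. destruct (modulus_spec x) as [A _]. rewrite conv_all_spec in A. apply A; auto.
  apply tabsum_lt; auto.
Qed.

End Modulus.

(* For a total Phi and Z = <A_k>, the set C_k = [Cset Z k]
   satisfies C_k(x) = 0 below the threshold m_k and
   C_k(x) = Phi(A_k (+) C_(k+1))(x) above it.  To compute C_k(x) up to x < L,
   Phi is run with the budget c = modulus (L - 1), which needs C_(k+1) below c
   only; iterating L |-> modulus (L - 1) gives the [modchain].  The
   thresholds are chosen so large that this chain, started at x + 1, after
   d <= x + 1 steps stays below the threshold of level k + d, where all bits
   are known to vanish; so the unfolding can stop there. *)
Section Levels.
Variable Phi : prog.
Hypothesis Phi_total : forall Z, exists B, computes Phi Z B.
Local Notation modulus := (modulus Phi Phi_total).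

Definition bitof (o : option nat) : nat := match o with Some v => sg v | None => 0 end.

Lemma bitof_le1 o : bitof o < 2.
Proof. destruct o; simpl; [pose proof (sg_le1 n)|]; lia. Qed.

(* [modchain L d] iterates L |-> modulus (L - 1) d times; the threshold m_j
   dominates all chains started at x + 1 <= j of length <= j. *)
Definition modchain (L n : nat) := nat_rect (fun _ => nat) L (fun _ L' => modulus (L' - 1)) n.
Definition threshold (j : nat) := maxn (fun x => maxn (fun d => modchain (S x) d) (S j)) j.

Lemma threshold_ge x d j : x < j -> d <= j -> modchain (S x) d <= threshold j.
Proof.
  intros; unfold threshold. eapply Nat.le_trans; [|apply maxn_ge with (i := x); auto].
  apply maxn_ge with (f := fun d => modchain (S x) d). lia.
Qed.

Lemma modchain_S L n : modchain L (S n) = modchain (modulus (L - 1)) n.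
Proof.
  revert L; induction n; intros L; auto.
  change (modchain L (S (S n))) with (modulus (modchain L (S n) - 1)). rewrite IHn. reflexivity.
Qed.

(* The oracle A_k (+) C_(k+1) below c, with C_(k+1) read from the table tb. *)
Definition level_oracle (Z : cset) (c k tb : nat) (n : nat) : option bool :=
  if n <? c then Some (if Nat.even n then Z (to_nat (k, Nat.div2 n)) else (digit 2 tb (Nat.div2 n) =? 1)) else None.

(* The first len bits of C_lv, computed with budget c from a table tb of C_(lv+1). *)
Definition level_table (Z : cset) (lv len c tb : nat) : nat :=
  tabsum 2 len (fun y => if y <? threshold lv then 0 else bitof (seval Phi c (level_oracle Z c lv tb) [y])).

(* [levels Z k L d]: the first L bits of C_k, unfolding d levels and taking
   the empty table at the last one. *)
Fixpoint levels (Z : cset) (k L d : nat) : nat :=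
  match d with 0 => 0 | S d' => level_table Z k L (modulus (L - 1)) (levels Z (S k) (modulus (L - 1)) d') end.

(* d levels suffice when the chain of lengths ends below the threshold of
   level k + d, where the true bits are all 0 like those of the empty table. *)
Fixpoint deep_enough (k L d : nat) : Prop :=
  match d with 0 => L <= threshold k | S d' => deep_enough (S k) (modulus (L - 1)) d' end.

Lemma deep_enough_iff d : forall k L, deep_enough k L d <-> modchain L d <= threshold (k + d).
Proof. induction d; intros k L; cbn [deep_enough]. change (modchain L 0) with L. rewrite Nat.add_0_r; tauto.
  rewrite modchain_S, IHd. rewrite Nat.add_succ_r. tauto. Qed.

Lemma deep_enough_diag k y : deep_enough k (S y) (S y).
Proof. apply deep_enough_iff. apply threshold_ge; lia. Qed.

Lemma level_table_bit Z lv len c tb y : y < len ->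
  digit 2 (level_table Z lv len c tb) y = if y <? threshold lv then 0 else bitof (seval Phi c (level_oracle Z c lv tb) [y]).
Proof.
  intros H. unfold level_table. rewrite tabsum_digit; auto. intros z. destruct (z <? threshold lv). lia. apply bitof_le1.
Qed.

Lemma level_oracle_converges Z x k tb y : y <= x -> seval Phi (modulus x) (level_oracle Z (modulus x) k tb) [y] <> None.
Proof.
  intros Hy. apply modulus_converges; auto.
  - intros n Hn. unfold level_oracle. destruct (Nat.ltb_spec n (modulus x)); [eauto|lia].
  - intros n Hn. unfold level_oracle. destruct (Nat.ltb_spec n (modulus x)); [lia|auto].
Qed.

(* Tables computed with sufficient depths agree on common bits; the two runs
   of Phi involved are both sound for a common extension X of their oracles. *)
Lemma levels_agree Z : forall d k L L' d' y, deep_enough k L d -> deep_enough k L' d' -> y < L -> y < L' ->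
  digit 2 (levels Z k L d) y = digit 2 (levels Z k L' d') y.
Proof.
  induction d as [|d IH]; intros k L L' d' y V V' H H'.
  - simpl in V. destruct d' as [|d']; auto. cbn [levels]. rewrite level_table_bit by auto.
    destruct (Nat.ltb_spec y (threshold k)); [|lia]. rewrite digit_0; reflexivity.
  - destruct d' as [|d'].
    + simpl in V'. cbn [levels]. rewrite level_table_bit by auto.
      destruct (Nat.ltb_spec y (threshold k)); [|lia]. rewrite digit_0; reflexivity.
    + simpl levels. rewrite !level_table_bit by auto. destruct (Nat.ltb_spec y (threshold k)); auto.
      simpl in V, V'.
      set (c := modulus (L - 1)) in *. set (c' := modulus (L' - 1)) in *.
      set (tb := levels Z (S k) c d). set (tb' := levels Z (S k) c' d').
      destruct (seval Phi c (level_oracle Z c k tb) [y]) as [v|] eqn:E1.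
      2: { exfalso. apply (level_oracle_converges Z (L - 1) k tb y); auto. lia. }
      destruct (seval Phi c' (level_oracle Z c' k tb') [y]) as [v'|] eqn:E2.
      2: { exfalso. apply (level_oracle_converges Z (L' - 1) k tb' y); auto. lia. }
      set (X := fun n => if Nat.even n then Z (to_nat (k, Nat.div2 n))
                         else if Nat.div2 n <? c then digit 2 tb (Nat.div2 n) =? 1 else digit 2 tb' (Nat.div2 n) =? 1).
      assert (eval Phi X [y] v).
      { eapply seval_sound; eauto. intros n b Hn. unfold level_oracle in Hn. destruct (Nat.ltb_spec n c); [|discriminate].
        injection Hn; intros; subst. unfold X. destruct (Nat.even n); auto.
        pose proof (div2_le n). destruct (Nat.ltb_spec (Nat.div2 n) c); auto; lia. }
      assert (eval Phi X [y] v').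
      { eapply seval_sound; eauto. intros n b Hn. unfold level_oracle in Hn. destruct (Nat.ltb_spec n c'); [|discriminate].
        injection Hn; intros; subst. unfold X. destruct (Nat.even n); auto.
        pose proof (div2_le n). destruct (Nat.ltb_spec (Nat.div2 n) c); auto.
        unfold tb, tb'. rewrite (IH (S k) c c' d'); auto. lia. }
      rewrite (eval_det _ _ _ _ H1 _ H2). reflexivity.
Qed.

Definition Cset (Z : cset) (k y : nat) : bool := digit 2 (levels Z k (S y) (S y)) y =? 1.

Lemma Cset_above Z k x B : threshold k <= x -> computes Phi (join (column Z k) (Cset Z (S k))) B -> Cset Z k x = B x.
Proof.
  intros Hx HB. unfold Cset. cbn [levels]. rewrite level_table_bit by lia. destruct (Nat.ltb_spec x (threshold k)); [lia|].
  replace (S x - 1) with x in * by lia. try rewrite Nat.sub_0_r.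
  set (c := modulus x). set (tb := levels Z (S k) c x).
  destruct (seval Phi c (level_oracle Z c k tb) [x]) as [v|] eqn:E1.
  2: { exfalso. apply (level_oracle_converges Z x k tb x); auto. }
  assert (eval Phi (join (column Z k) (Cset Z (S k))) [x] v).
  { eapply seval_sound; eauto. intros n b Hn. unfold level_oracle in Hn. destruct (Nat.ltb_spec n c); [|discriminate].
    injection Hn; intros; subst. unfold join. destruct (Nat.even n); auto.
    unfold Cset. f_equal. unfold tb. apply levels_agree.
    - apply deep_enough_diag.
    - pose proof (deep_enough_diag k x) as V. simpl in V. rewrite Nat.sub_0_r in V. exact V.
    - lia.
    - pose proof (div2_le n); lia. }
  rewrite (eval_det _ _ _ _ H0 _ (HB x)). destruct (B x); reflexivity.
Qed.

End Levels.

Section ModulusPrograms.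
Variable Phi : prog.
Hypothesis Phi_total : forall Z, exists B, computes Phi Z B.

Definition bit_oracleP :=
  PComp ifzP [PComp ltP [PProj 2; PProj 0]; PZero; PComp PSucc [PComp digitP [PProj 1; constP 2; PProj 2]]].
Definition bit_orc (X : cset) (ps : list nat) (n : nat) := bit_oracle (nth 1 ps 0) (nth 0 ps 0) n.
Lemma bit_oracleP_ev X ps n : length ps = 2 -> eval bit_oracleP X (ps ++ [n]) (ocode (bit_orc X ps n)).
Proof.
  intros Hl. destruct ps as [|c [|t [|]]]; simpl in Hl; try lia. simpl.
  eapply eval_eq. unfold bit_oracleP. ev. simpl. unfold bit_orc, bit_oracle. simpl.
  destruct (Nat.ltb_spec n c); simpl; auto. rewrite digit2_b2n. reflexivity.
Qed.

Definition trialP := relativize 2 bit_oracleP Phi 1.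
Lemma trial_ev X c t x : eval trialP X [c; t; x] (oenc (seval Phi c (bit_oracle t c) [x])).
Proof. apply (relativize_correct 2 bit_oracleP bit_orc ltac:(lia) bit_oracleP_ev Phi 1 X [c; t] [x]); reflexivity. Qed.
Hint Resolve trial_ev : evdb.

Definition conv_tableP := PComp (PPrimRec one (PComp mulP [PProj 1; PComp sgP [PComp trialP [PProj 2; PProj 3; PProj 0]]]))
                           [PComp PSucc [PProj 2]; PProj 0; PProj 1].
Lemma conv_table_ev X c t x : eval conv_tableP X [c; t; x] (conv_table Phi c t x).
Proof. unfold conv_tableP. eapply ev_comp. evl. apply prim_ev. apply one_ev. intros. ev. Qed.
Hint Resolve conv_table_ev : evdb.

Definition conv_allP := PComp (PPrimRec one (PComp mulP [PProj 1; PComp conv_tableP [PProj 2; PProj 0; PProj 3]]))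
                           [PComp powP [constP 2; PProj 0]; PProj 0; PProj 1].
Lemma conv_all_ev X c x : eval conv_allP X [c; x] (conv_all Phi c x).
Proof. unfold conv_allP. eapply ev_comp. evl. apply prim_ev. apply one_ev. intros. ev. Qed.
Hint Resolve conv_all_ev : evdb.

Definition modulusP := PMu (PComp nsgP [PComp conv_allP [PProj 0; PProj 1]]).
Lemma modulus_ev X x : eval modulusP X [x] (modulus Phi Phi_total x).
Proof.
  destruct (modulus_spec Phi Phi_total x) as [A B]. constructor.
  - eapply eval_eq. ev. simpl. rewrite A. reflexivity.
  - intros m Hm. exists 0. eapply eval_eq. ev. simpl. rewrite B; auto.
Qed.
Hint Resolve modulus_ev : evdb.

Definition modchainP := PComp (PPrimRec (PProj 0) (PComp modulusP [PComp predP [PProj 1]])) [PProj 1; PProj 0].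
Lemma modchain_ev X L n : eval modchainP X [L; n] (modchain Phi Phi_total L n).
Proof.
  unfold modchainP. eapply ev_comp. evl. apply prim_ev. apply ev_proj.
  intros. eapply eval_eq. ev. simpl. rewrite Nat.sub_1_r. reflexivity.
Qed.
Hint Resolve modchain_ev : evdb.

Definition thresholdP := PComp (PPrimRec PZero (PComp maxP [PProj 1;
                   PComp (PPrimRec PZero (PComp maxP [PProj 1; PComp modchainP [PComp PSucc [PProj 2]; PProj 0]]))
                         [PComp PSucc [PProj 2]; PProj 0]])) [PProj 0; PProj 0].
Lemma threshold_ev X j : eval thresholdP X [j] (threshold Phi Phi_total j).
Proof.
  unfold thresholdP. eapply ev_comp. evl. apply prim_ev. constructor.
  intros k r. eapply eval_eq. eapply ev_comp. constructor. apply ev_proj. constructor. eapply ev_comp. evl.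
  apply prim_ev with (G := fun d acc => Nat.max acc (modchain Phi Phi_total (S k) d)). constructor.
  intros. eapply eval_eq. ev. reflexivity. constructor. apply max_ev. reflexivity.
Qed.
Hint Resolve threshold_ev : evdb.
End ModulusPrograms.
(* These evaluation lemmas depend on the totality of Phi; use the one in context. *)
#[export] Hint Extern 1 (eval (thresholdP ?P) _ _ _) =>
  match goal with H : forall Z, exists B, computes P Z B |- _ => apply (threshold_ev P H) end : evdb.
#[export] Hint Extern 1 (eval (modulusP ?P) _ _ _) =>
  match goal with H : forall Z, exists B, computes P Z B |- _ => apply (modulus_ev P H) end : evdb.
#[export] Hint Extern 1 (eval (modchainP ?P) _ _ _) =>
  match goal with H : forall Z, exists B, computes P Z B |- _ => apply (modchain_ev P H) end : evdb.

(* The oracle of the program gives access to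
   Z = <A_k> through [zread], which computes [zof X] from the oracle X; the
   forward functional reads Z directly, the weak backward functional reads Z
   from the even part of A (+) T. *)
Section LevelPrograms.
Variable Phi : prog.
Hypothesis Phi_total : forall Z, exists B, computes Phi Z B.
Variable zread : prog.
Variable zof : cset -> cset.
Hypothesis Hzread : forall X m, eval zread X [m] (b2n (zof X m)).

Definition level_oracleP := PComp ifzP [PComp ltP [PProj 3; PProj 0]; PZero;
   PComp PSucc [PComp ifzP [PComp evenP [PProj 3]; PComp digitP [PProj 2; constP 2; PComp div2P [PProj 3]];
                            PComp zread [PComp tonatP [PProj 1; PComp div2P [PProj 3]]]]]].
Definition level_orc (X : cset) (ps : list nat) (n : nat) := level_oracle (zof X) (nth 0 ps 0) (nth 1 ps 0) (nth 2 ps 0) n.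
Lemma level_oracleP_ev X ps n : length ps = 3 -> eval level_oracleP X (ps ++ [n]) (ocode (level_orc X ps n)).
Proof.
  intros Hl. destruct ps as [|c [|k [|tb [|]]]]; simpl in Hl; try lia. simpl.
  eapply eval_eq. unfold level_oracleP. ev. simpl. unfold level_orc, level_oracle. simpl.
  destruct (Nat.ltb_spec n c); simpl; auto. destruct (Nat.even n); simpl; auto. rewrite digit2_b2n. reflexivity.
Qed.

Definition level_trialP := relativize 3 level_oracleP Phi 1.
Lemma level_trial_ev X c k tb y : eval level_trialP X [c; k; tb; y] (oenc (seval Phi c (level_oracle (zof X) c k tb) [y])).
Proof. apply (relativize_correct 3 level_oracleP level_orc ltac:(lia) level_oracleP_ev Phi 1 X [c; k; tb] [y]); reflexivity. Qed.
Hint Resolve level_trial_ev : evdb.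

Definition level_tableP := PComp (PPrimRec PZero (PComp addP [PProj 1; PComp mulP [
      PComp ifzP [PComp ltP [PProj 0; PComp (thresholdP Phi) [PProj 2]];
                  PComp sgP [PComp predP [PComp level_trialP [PProj 3; PProj 2; PProj 4; PProj 0]]]; PZero];
      PComp powP [constP 2; PProj 0]]]))
   [PProj 1; PProj 0; PProj 2; PProj 3].
Lemma level_table_ev X lv len c tb : eval level_tableP X [lv; len; c; tb] (level_table Phi Phi_total (zof X) lv len c tb).
Proof.
  unfold level_tableP. eapply ev_comp. evl. apply prim_ev. constructor.
  intros y acc. eapply eval_eq. ev. simpl.
  destruct (y <? threshold Phi Phi_total lv); simpl; auto.
  destruct (seval Phi c (level_oracle (zof X) c lv tb) [y]); reflexivity.
Qed.
Hint Resolve level_table_ev : evdb.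

(* [levels] computed bottom-up: after e steps of the loop, the table of
   level k + d - e along the modchain started at L. *)
Definition levels_loop (Z : cset) (k L d e : nat) :=
  nat_rect (fun _ => nat) 0 (fun e' tb => level_table Phi Phi_total Z (k + d - S e') (modchain Phi Phi_total L (d - S e'))
                                           (modchain Phi Phi_total L (d - e')) tb) e.

Lemma levels_loop_eq Z k L d : forall e, e <= d ->
  levels_loop Z k L d e = levels Phi Phi_total Z (k + d - e) (modchain Phi Phi_total L (d - e)) e.
Proof.
  induction e; intros He. reflexivity.
  change (levels_loop Z k L d (S e)) with (level_table Phi Phi_total Z (k + d - S e) (modchain Phi Phi_total L (d - S e))
                                           (modchain Phi Phi_total L (d - e)) (levels_loop Z k L d e)).
  rewrite IHe by lia. cbn [levels].
  replace (S (k + d - S e)) with (k + d - e) by lia.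
  replace (d - e) with (S (d - S e)) by lia. reflexivity.
Qed.

Definition levels_loopP :=
  PComp (PPrimRec PZero (PComp level_tableP [PComp subP [PComp addP [PProj 2; PProj 4]; PComp PSucc [PProj 0]];
     PComp (modchainP Phi) [PProj 3; PComp subP [PProj 4; PComp PSucc [PProj 0]]];
     PComp (modchainP Phi) [PProj 3; PComp subP [PProj 4; PProj 0]]; PProj 1]))
   [PProj 3; PProj 0; PProj 1; PProj 2].
Lemma levels_loop_ev X k L d e : eval levels_loopP X [k; L; d; e] (levels_loop (zof X) k L d e).
Proof. unfold levels_loopP. eapply ev_comp. evl. apply prim_ev. constructor. intros. ev. Qed.
Hint Resolve levels_loop_ev : evdb.

Definition CsetP :=
  PComp digitP [PComp levels_loopP [PProj 0; PComp PSucc [PProj 1]; PComp PSucc [PProj 1]; PComp PSucc [PProj 1]];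
                               constP 2; PProj 1].
Lemma Cset_ev X k y : eval CsetP X [k; y] (b2n (Cset Phi Phi_total (zof X) k y)).
Proof.
  eapply eval_eq. unfold CsetP. ev. cbn [nth]. rewrite levels_loop_eq by lia. rewrite Nat.sub_diag.
  replace (k + S y - S y) with k by lia. unfold Cset. rewrite digit2_b2n. reflexivity.
Qed.
End LevelPrograms.

Definition forwardP (Phi : prog) := PComp (CsetP Phi POracle) [PZero; PProj 0].

Lemma forwardP_computes Phi (Phi_total : forall Z, exists B, computes Phi Z B) A :
  computes (forwardP Phi) A (Cset Phi Phi_total A 0).
Proof.
  intros n. unfold forwardP. eapply ev_comp. evl.
  apply (Cset_ev Phi Phi_total POracle (fun X => X) (fun X m => ev_oracle X [m]) A 0 n).
Qed.

(* Ternary tables code finite partial functions into bool: digit 0 means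
   "unknown", 1 means false and 2 means true. *)
Definition dec3 (d : nat) : option bool := match d with 0 => None | 1 => Some false | _ => Some true end.
Definition Otab (t len n : nat) : option bool := if n <? len then dec3 (digit 3 t n) else None.
Definition enc3 (o : option nat) : nat := match o with None => 0 | Some v => S (sg v) end.

Lemma enc3_lt o : enc3 o < 3. Proof. destruct o; simpl; [pose proof (sg_le1 n)|]; lia. Qed.
Lemma ocode_dec3 d : d < 3 -> ocode (dec3 d) = d.
Proof. destruct d as [|[|[|]]]; simpl; auto; lia. Qed.

Lemma eventually_all (P : nat -> nat -> Prop) : (forall n, exists c0, forall c, c0 <= c -> P n c) ->
  forall L, exists c0, forall n, n < L -> forall c, c0 <= c -> P n c.
Proof.
  intros H L; induction L. exists 0; intros; lia.
  destruct IHL as [a Ha]. destruct (H L) as [b Hb]. exists (Nat.max a b). intros n Hn c Hc.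
  destruct (Nat.eq_dec n L); [subst; apply Hb; lia|]. apply Ha; lia.
Qed.

Lemma least_ex (P : nat -> Prop) n : P n -> exists c, P c /\ forall m, m < c -> ~ P m.
Proof.
  assert (forall k, (exists c, c <= k /\ P c) -> exists c, P c /\ forall m, m < c -> ~ P m).
  { induction k; intros [c [Hc Pc]].
    - exists 0. split. replace 0 with c by lia; auto. intros; lia.
    - destruct (classic (exists c, c <= k /\ P c)) as [E|E]; auto.
      exists (S k). assert (c = S k). { destruct (Nat.eq_dec c (S k)); auto. exfalso. apply E. exists c; split; auto; lia. }
      subst; split; auto. intros m Hm Pm. apply E. exists m; split; auto; lia. }
  intros Pn. apply (H n). exists n; auto.
Qed.

(* Given its input X (containing the solution T of
   C_0), stage k of a run with budget c computes, as ternary tables of length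
   c: the partial set S_k = Theta(R_k, m_k), where R_0 = T is read from X by
   [tread] and R_(k+1) is the odd half of the table of W_k; and the partial set
   W_k = Psi(...), whose oracle [psi_oracle] is built from the table of S_k
   (and, in the weak case, from X).  The answer for <i, x> is entry 2x of the
   table of W_i.  It is correct whenever defined ([answer_sound]) and defined
   for all large budgets ([answer_complete]); the output program searches for
   the least budget giving an answer. *)
Section Backward.
Variable Phi : prog.
Hypothesis Phi_total : forall Z, exists B, computes Phi Z B.
Variables Theta Psi : prog.
Variable tread : prog.
Variable tof : cset -> cset.
Hypothesis Htread : forall X m, eval tread X [m] (b2n (tof X m)).
Variable psi_oracleP : prog.
Variable psi_oracle : cset -> nat -> nat -> nat -> nat -> option bool.
Hypothesis Hpsi_oracle : forall X c k tS n, eval psi_oracleP X [c; k; tS; n] (ocode (psi_oracle X c k tS n)).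

Local Notation thr := (threshold Phi Phi_total).

Definition theta_oracle (X : cset) (c k tW : nat) (n : nat) : option bool :=
  match k with 0 => Some (tof X n) | _ => Otab tW c (2 * n + 1) end.
Definition tableS X c k tW := tabsum 3 c (fun y => enc3 (seval Theta c (theta_oracle X c k tW) [thr k; y])).
Definition tableW X c k tS := tabsum 3 c (fun y => enc3 (seval Psi c (psi_oracle X c k tS) [y])).
Definition stage X c (k : nat) := nat_rect (fun _ => nat) 0 (fun k tW => tableW X c k (tableS X c k tW)) k.
Definition answer X c i x := digit 3 (stage X c (S i)) (2 * x).

Definition theta_oracleP := PComp ifzP [PProj 1; PComp PSucc [PComp tread [PProj 3]];
   PComp ifzP [PComp ltP [PComp PSucc [PComp mulP [constP 2; PProj 3]]; PProj 0]; PZero;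
               PComp digitP [PProj 2; constP 3; PComp PSucc [PComp mulP [constP 2; PProj 3]]]]].
Definition theta_orc (X : cset) (ps : list nat) (n : nat) := theta_oracle X (nth 0 ps 0) (nth 1 ps 0) (nth 2 ps 0) n.
Lemma theta_oracleP_ev X ps n : length ps = 3 -> eval theta_oracleP X (ps ++ [n]) (ocode (theta_orc X ps n)).
Proof.
  intros Hl. destruct ps as [|c [|k [|tW [|]]]]; simpl in Hl; try lia. simpl.
  eapply eval_eq. unfold theta_oracleP. ev. simpl. unfold theta_orc, theta_oracle. simpl.
  destruct k; simpl; auto. unfold Otab. replace (n + (n + 0) + 1) with (S (n + (n + 0))) by lia.
  destruct (S (n + (n + 0)) <? c); simpl; auto. rewrite ocode_dec3; auto. apply digit_lt; lia.
Qed.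

Definition theta_trialP := relativize 3 theta_oracleP Theta 2.
Lemma theta_trial_ev X c k tW m y : eval theta_trialP X [c; k; tW; m; y] (oenc (seval Theta c (theta_oracle X c k tW) [m; y])).
Proof.
  apply (relativize_correct 3 theta_oracleP theta_orc ltac:(lia) theta_oracleP_ev Theta 2 X [c; k; tW] [m; y]);
    reflexivity.
Qed.

Definition psi_orc (X : cset) (ps : list nat) (n : nat) := psi_oracle X (nth 0 ps 0) (nth 1 ps 0) (nth 2 ps 0) n.
Lemma psi_oracleP_ev X ps n : length ps = 3 -> eval psi_oracleP X (ps ++ [n]) (ocode (psi_orc X ps n)).
Proof. intros Hl. destruct ps as [|c [|k [|tS [|]]]]; simpl in Hl; try lia. apply Hpsi_oracle. Qed.
Definition psi_trialP := relativize 3 psi_oracleP Psi 1.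
Lemma psi_trial_ev X c k tS y : eval psi_trialP X [c; k; tS; y] (oenc (seval Psi c (psi_oracle X c k tS) [y])).
Proof. apply (relativize_correct 3 psi_oracleP psi_orc ltac:(lia) psi_oracleP_ev Psi 1 X [c; k; tS] [y]); reflexivity. Qed.

Definition enc3P (e : prog) := PComp ifzP [e; PZero; PComp PSucc [PComp sgP [PComp predP [e]]]].
Lemma enc3_ev X xs e o : eval e X xs (oenc o) -> eval (enc3P e) X xs (enc3 o).
Proof. intros H. eapply eval_eq. unfold enc3P. ev. destruct o; reflexivity. Qed.

Hint Extern 1 (eval (enc3P _) _ _ _) => apply enc3_ev; ev : evdb.
Hint Resolve theta_trial_ev psi_trial_ev : evdb.

Definition tableSP := PComp (PPrimRec PZero (PComp addP [PProj 1; PComp mulP [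
      enc3P (PComp theta_trialP [PProj 2; PProj 3; PProj 4; PComp (thresholdP Phi) [PProj 3]; PProj 0]);
      PComp powP [constP 3; PProj 0]]])) [PProj 0; PProj 0; PProj 1; PProj 2].
Lemma tableS_ev X c k tW : eval tableSP X [c; k; tW] (tableS X c k tW).
Proof.
  unfold tableSP. eapply ev_comp. evl. apply prim_ev. constructor. intros. ev.
Qed.
Definition tableWP := PComp (PPrimRec PZero (PComp addP [PProj 1; PComp mulP [
      enc3P (PComp psi_trialP [PProj 2; PProj 3; PProj 4; PProj 0]);
      PComp powP [constP 3; PProj 0]]])) [PProj 0; PProj 0; PProj 1; PProj 2].
Lemma tableW_ev X c k tS : eval tableWP X [c; k; tS] (tableW X c k tS).
Proof.
  unfold tableWP. eapply ev_comp. evl. apply prim_ev. constructor. intros. ev.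
Qed.
Hint Resolve tableS_ev tableW_ev : evdb.
Definition stageP :=
  PComp (PPrimRec PZero (PComp tableWP [PProj 2; PProj 0; PComp tableSP [PProj 2; PProj 0; PProj 1]])) [PProj 1; PProj 0].
Lemma stage_ev X c k : eval stageP X [c; k] (stage X c k).
Proof. unfold stageP. eapply ev_comp. evl. apply prim_ev. constructor. intros. ev. Qed.
Hint Resolve stage_ev : evdb.
Definition answerP := PComp digitP [PComp stageP [PProj 0; PComp PSucc [PProj 1]]; constP 3; PComp mulP [constP 2; PProj 2]].
Lemma answer_ev X c i x : eval answerP X [c; i; x] (answer X c i x).
Proof. unfold answerP. eapply eval_eq. ev. reflexivity. Qed.
Hint Resolve answer_ev : evdb.

(* Correctness, with respect to a true chain R_k, S_k, W_k in which Psi at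
   stage k is given the oracle [PsiIn k], approximated by [psi_oracle]. *)
Variable X : cset.
Variables Rt St Wt PsiIn : nat -> cset.
Hypothesis Htheta_step : forall k, computes2 Theta (Rt k) (thr k) (St k).
Hypothesis Hpsi_step : forall k, computes Psi (PsiIn k) (Wt k).
Hypothesis Hstart : Rt 0 = tof X.
Hypothesis Hnext : forall k, Rt (S k) = right_part (Wt k).
Hypothesis Hpsi_oracle_sound : forall c k tS n b, (forall y b', Otab tS c y = Some b' -> St k y = b') ->
  psi_oracle X c k tS n = Some b -> PsiIn k n = b.
Hypothesis Hpsi_oracle_complete : forall c k tS n, (forall y, y <= n -> Otab tS c y = Some (St k y)) ->
  psi_oracle X c k tS n = Some (PsiIn k n).

Lemma Otab_tab c f y b : (forall z, f z < 3) -> Otab (tabsum 3 c f) c y = Some b -> y < c /\ dec3 (f y) = Some b.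
Proof.
  intros Hf H. unfold Otab in H. destruct (Nat.ltb_spec y c); [|discriminate]. rewrite tabsum_digit in H; auto.
Qed.

Lemma dec3_enc3 o b : dec3 (enc3 o) = Some b -> exists v, o = Some v /\ b = negb (sg v =? 0).
Proof. destruct o as [v|]; simpl; [|discriminate]. destruct v; simpl; intros H; injection H; intros; subst; eauto. Qed.

Lemma soundS c k : (forall n b, theta_oracle X c k (stage X c k) n = Some b -> Rt k n = b) ->
  forall y b, Otab (tableS X c k (stage X c k)) c y = Some b -> St k y = b.
Proof.
  intros HR y b H. apply Otab_tab in H; [|intros; apply enc3_lt]. destruct H as [_ H].
  apply dec3_enc3 in H. destruct H as [v [E Hb]]. subst b.
  eapply seval_sound in E; [|exact HR]. rewrite (eval_det _ _ _ _ E _ (Htheta_step k y)). destruct (St k y); reflexivity.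
Qed.

Lemma soundW c k tS : (forall y b, Otab tS c y = Some b -> St k y = b) ->
  forall y b, Otab (tableW X c k tS) c y = Some b -> Wt k y = b.
Proof.
  intros HS y b H. apply Otab_tab in H; [|intros; apply enc3_lt]. destruct H as [_ H].
  apply dec3_enc3 in H. destruct H as [v [E Hb]]. subst b.
  eapply seval_sound in E. rewrite (eval_det _ _ _ _ E _ (Hpsi_step k y)). destruct (Wt k y); reflexivity.
  intros n b Hn. eapply Hpsi_oracle_sound; eauto.
Qed.

Lemma sound_all c : forall k y b, Otab (stage X c (S k)) c y = Some b -> Wt k y = b.
Proof.
  induction k.
  - apply soundW. apply soundS. intros n b H. simpl in H. injection H; intros; subst. rewrite Hstart; auto.
  - apply soundW. apply soundS. intros n b H. simpl theta_oracle in H. rewrite Hnext. unfold right_part.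
    apply IHk. replace (2 * n + 1) with (n + n + 1) in H by lia. apply H.
Qed.

Definition settles (tab : nat -> nat) (Y : cset) :=
  forall y, exists c0, forall c, c0 <= c -> Otab (tab c) c y = Some (Y y).

(* S_k settles once the oracle of Theta is eventually right on each initial
   segment (use principle for Theta). *)
Lemma completeS k :
  (forall L, exists c0, forall n, n < L -> forall c, c0 <= c ->
     theta_oracle X c k (stage X c k) n = Some (Rt k n)) ->
  settles (fun c => tableS X c k (stage X c k)) (St k).
Proof.
  intros HR y. destruct (seval_complete _ _ _ _ (Htheta_step k y)) as [F0 [L G]].
  destruct (HR L) as [c1 Hc1]. exists (Nat.max (S y) (Nat.max F0 c1)). intros c Hc.
  unfold Otab. destruct (Nat.ltb_spec y c); [|lia].
  unfold tableS. rewrite tabsum_digit by (auto; intros; apply enc3_lt).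
  rewrite (G c (theta_oracle X c k (stage X c k))) by (try lia; intros; apply Hc1; lia).
  destruct (St k y); reflexivity.
Qed.

(* W_k settles once S_k does (use principle for Psi). *)
Lemma completeW k : settles (fun c => tableS X c k (stage X c k)) (St k) -> settles (fun c => stage X c (S k)) (Wt k).
Proof.
  intros HSk y. destruct (seval_complete _ _ _ _ (Hpsi_step k y)) as [F0 [L G]].
  destruct (eventually_all (fun n c => Otab (tableS X c k (stage X c k)) c n = Some (St k n)) HSk L) as [c1 Hc1].
  exists (Nat.max (S y) (Nat.max F0 c1)). intros c Hc.
  unfold Otab. destruct (Nat.ltb_spec y c); [|lia].
  change (stage X c (S k)) with (tableW X c k (tableS X c k (stage X c k))).
  unfold tableW. rewrite tabsum_digit by (auto; intros; apply enc3_lt).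
  rewrite (G c (psi_oracle X c k (tableS X c k (stage X c k)))); [destruct (Wt k y); reflexivity | lia |].
  intros n Hn. apply Hpsi_oracle_complete. intros y' Hy'. apply Hc1; lia.
Qed.

Lemma complete_all k : settles (fun c => stage X c (S k)) (Wt k).
Proof.
  induction k as [|k IHk]; apply completeW, completeS.
  - intros L. exists 0. intros n _ c _. simpl. rewrite Hstart. reflexivity.
  - intros L. destruct (eventually_all (fun n c => Otab (stage X c (S k)) c n = Some (Wt k n)) IHk (2 * L))
      as [c1 Hc1].
    exists c1. intros n Hn c Hc. simpl theta_oracle. rewrite Hnext. unfold right_part.
    replace (n + n + 1) with (2 * n + 1) by lia. apply Hc1; lia.
Qed.

Lemma answer_sound c i x : answer X c i x <> 0 -> answer X c i x = S (b2n (Wt i (2 * x))).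
Proof.
  intros H. unfold answer in *.
  assert (Hl : digit 3 (stage X c (S i)) (2 * x) < 3) by (apply digit_lt; lia).
  destruct (Nat.ltb_spec (2 * x) c) as [Hc|Hc].
  - assert (Otab (stage X c (S i)) c (2 * x) = dec3 (digit 3 (stage X c (S i)) (2 * x))) as E
      by (unfold Otab; destruct (Nat.ltb_spec (2 * x) c); auto; lia).
    destruct (digit 3 (stage X c (S i)) (2 * x)) as [|[|[|]]] eqn:D; try lia;
    cbn [dec3] in E; apply sound_all in E; rewrite E; reflexivity.
  - exfalso. apply H. destruct i; simpl stage; unfold tableW; apply tabsum_digit_out; auto; intros; apply enc3_lt.
Qed.

Lemma answer_complete i x : exists c0, forall c, c0 <= c -> answer X c i x <> 0.
Proof.
  destruct (complete_all i (2 * x)) as [c0 Hc0]. exists c0. intros c Hc.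
  specialize (Hc0 c Hc). unfold Otab in Hc0. unfold answer. destruct (2 * x <? c); [|discriminate].
  destruct (digit 3 (stage X c (S i)) (2 * x)); simpl in Hc0; discriminate.
Qed.

Definition searchP := PMu (PComp nsgP [PComp sgP [PComp answerP [PProj 0; PProj 1; PProj 2]]]).
Definition backwardP := PComp predP [PComp answerP [PComp searchP [fstNP; sndNP]; fstNP; sndNP]].

Lemma backwardP_computes : computes backwardP X (fun n => Wt (fst (of_nat n)) (2 * snd (of_nat n))).
Proof.
  intros n. set (i := fst (of_nat n)). set (x := snd (of_nat n)).
  destruct (answer_complete i x) as [c0 Hc0].
  destruct (least_ex (fun c => answer X c i x <> 0) c0) as [c [Pc Hl]].
  { apply Hc0; lia. }
  assert (E : eval searchP X [i; x] c).
  { constructor.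
    - eapply eval_eq. ev. simpl. destruct (answer X c i x); [congruence|reflexivity].
    - intros m Hm. exists 0. eapply eval_eq. ev. simpl.
      specialize (Hl m Hm). destruct (answer X m i x); [reflexivity|]. exfalso; apply Hl; discriminate. }
  unfold backwardP. eapply eval_eq. eapply ev_comp. constructor. eapply ev_comp. constructor.
  eapply ev_comp. constructor. apply fstN_ev. constructor. apply sndN_ev. constructor. exact E.
  constructor. apply fstN_ev. constructor. apply sndN_ev. constructor.
  apply answer_ev. constructor. apply pred_ev.
  fold i x. rewrite (answer_sound c i x Pc). reflexivity.
Qed.
End Backward.

Definition pick (Prop_of : cset -> Prop) : cset :=
  match excluded_middle_informative (exists X, Prop_of X) with
  | left H => proj1_sig (constructive_indefinite_description _ H)
  | right _ => fun _ => false
  end.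

Lemma pick_spec (Prop_of : cset -> Prop) : (exists X, Prop_of X) -> Prop_of (pick Prop_of).
Proof.
  intros H. unfold pick. destruct (excluded_middle_informative (exists X, Prop_of X)); [|tauto].
  destruct (constructive_indefinite_description _ e); auto.
Qed.

Lemma column_left_halves (W : nat -> cset) i :
  column (fun n => W (fst (of_nat n)) (2 * snd (of_nat n))) i = left_part (W i).
Proof. extensionality x. unfold column, left_part. rewrite cancel_of_to. reflexivity. Qed.

(* Fix the data of the theorem: total P, finite tolerance of P
   via Theta, and a reduction (Phi, Psi) of <Q,P> to P, where Psi receives
   [psi_input Z S] for an instance Z and a solution S of Phi(Z) (S itself in
   the strong case, Z (+) S in the weak case). *)
Section Reduction.
Variables P Q : problem.
Hypothesis HtotP : total P.
Variable Theta : prog.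
Hypothesis HTh : forall B1 B2 m, instance P B1 -> instance P B2 -> (forall x, m <= x -> B1 x = B2 x) ->
  forall S1, solution P B1 S1 -> exists S2, computes2 Theta S1 m S2 /\ solution P B2 S2.
Variables Phi Psi : prog.
Hypothesis Phi_total : forall Z, exists B, computes Phi Z B.
Variable psi_input : cset -> cset -> cset.
Hypothesis Hback : forall Z B S, computes Phi Z B -> solution P B S ->
  exists W, computes Psi (psi_input Z S) W /\ solution (parallel Q P) Z W.

(* The chain of true solutions for an instance A = <A_k> and a solution T of
   C_0: R_0 = T solves C_k; S_k = Theta(R_k, m_k) solves B_k = Phi(Z_k) with
   Z_k = A_k (+) C_(k+1); W_k = Psi(psi_input Z_k S_k) solves Z_k; and
   R_(k+1), the right half of W_k, solves C_(k+1). *)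
Section Chain.
Variables A T : cset.
Definition Ck k := Cset Phi Phi_total A k.
Definition Zk k := join (column A k) (Ck (S k)).
Hypothesis HT : solution P (Ck 0) T.

Definition Bk k := pick (fun B => computes Phi (Zk k) B).
Definition Spick k R := pick (fun S => computes2 Theta R (threshold Phi Phi_total k) S /\ solution P (Bk k) S).
Definition Wpick k S := pick (fun W => computes Psi (psi_input (Zk k) S) W /\ solution (parallel Q P) (Zk k) W).
Definition Rchain k := nat_rect (fun _ => cset) T (fun k R => right_part (Wpick k (Spick k R))) k.
Definition Schain k := Spick k (Rchain k).
Definition Wchain k := Wpick k (Schain k).

Lemma Bk_spec k : computes Phi (Zk k) (Bk k).
Proof. unfold Bk. apply pick_spec. apply Phi_total. Qed.

(* One link of the chain, for any solution R of C_k; finite tolerance applies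
   because C_k and B_k agree from the threshold m_k on. *)
Lemma step_facts k R : solution P (Ck k) R ->
  (computes2 Theta R (threshold Phi Phi_total k) (Spick k R) /\ solution P (Bk k) (Spick k R)) /\
  (computes Psi (psi_input (Zk k) (Spick k R)) (Wpick k (Spick k R)) /\
   solution (parallel Q P) (Zk k) (Wpick k (Spick k R))).
Proof.
  intros HR.
  assert (HS : computes2 Theta R (threshold Phi Phi_total k) (Spick k R) /\ solution P (Bk k) (Spick k R)).
  { unfold Spick. apply pick_spec. apply HTh with (B1 := Ck k); auto.
    intros x Hx. unfold Ck. apply Cset_above; auto. apply Bk_spec. }
  split; auto. unfold Wpick. apply pick_spec. eapply Hback. apply Bk_spec. apply HS.
Qed.

Lemma Rchain_solves k : solution P (Ck k) (Rchain k).
Proof.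
  induction k; simpl; auto. destruct (step_facts k _ IHk) as [_ [_ [_ HW]]].
  unfold Zk in HW. rewrite right_join in HW. exact HW.
Qed.

Lemma chain_props :
  Rchain 0 = T /\ (forall k, Rchain (S k) = right_part (Wchain k)) /\
  (forall k, computes2 Theta (Rchain k) (threshold Phi Phi_total k) (Schain k)) /\
  (forall k, computes Psi (psi_input (Zk k) (Schain k)) (Wchain k)) /\
  (forall k, solution Q (column A k) (left_part (Wchain k))).
Proof.
  split; [reflexivity|]. split; [reflexivity|].
  split; [intros k; apply (step_facts k _ (Rchain_solves k))|].
  split; [intros k; apply (step_facts k _ (Rchain_solves k))|].
  intros k. destruct (step_facts k _ (Rchain_solves k)) as [_ [_ [HW _]]].
  unfold Zk in HW. rewrite left_join in HW. exact HW.
Qed.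
End Chain.

(* The backward functional receives [input A T]
   (T in the strong case, A (+) T in the weak case) and must be able to read
   T from it through [tread], and to compute the oracle of Psi at stage k from
   its input and a finite table of S_k through [psi_oracleP]. *)
Variable input : cset -> cset -> cset.
Variable tread : prog.
Variable tof : cset -> cset.
Hypothesis Htread : forall X m, eval tread X [m] (b2n (tof X m)).
Hypothesis Htof : forall A T, tof (input A T) = T.
Variable psi_oracleP : prog.
Variable psi_oracle : cset -> nat -> nat -> nat -> nat -> option bool.
Hypothesis Hpsi_oracle : forall X c k tS n, eval psi_oracleP X [c; k; tS; n] (ocode (psi_oracle X c k tS n)).
Hypothesis Hpsi_oracle_sound : forall A T S c k tS n b,
  (forall y b', Otab tS c y = Some b' -> S y = b') ->
  psi_oracle (input A T) c k tS n = Some b -> psi_input (Zk A k) S n = b.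
Hypothesis Hpsi_oracle_complete : forall A T S c k tS n,
  (forall y, y <= n -> Otab tS c y = Some (S y)) ->
  psi_oracle (input A T) c k tS n = Some (psi_input (Zk A k) S n).

Lemma omega_reduction : exists Phi' Psi', forall A, instance (omega_power Q) A ->
  (exists B, computes Phi' A B /\ instance P B) /\
  (forall B, computes Phi' A B -> forall T, solution P B T ->
     exists S, computes Psi' (input A T) S /\ solution (omega_power Q) A S).
Proof.
  exists (forwardP Phi), (backwardP Phi Theta Psi tread psi_oracleP). intros A _. split.
  { exists (Cset Phi Phi_total A 0). split; [apply forwardP_computes|apply HtotP]. }
  intros B HB T HT.
  rewrite (computes_unique _ _ _ _ HB (forwardP_computes Phi Phi_total A)) in HT.
  destruct (chain_props A T HT) as [Hstart [Hnext [Htheta [Hpsi HQ]]]].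
  exists (fun n => Wchain A T (fst (of_nat n)) (2 * snd (of_nat n))). split.
  - apply (backwardP_computes Phi Phi_total Theta Psi tread tof Htread psi_oracleP psi_oracle Hpsi_oracle
             (input A T) (Rchain A T) (Schain A T) (Wchain A T) (fun k => psi_input (Zk A k) (Schain A T k))
             Htheta Hpsi).
    + rewrite Hstart, Htof. reflexivity.
    + exact Hnext.
    + intros. eapply Hpsi_oracle_sound; eauto.
    + intros. apply Hpsi_oracle_complete; auto.
  - intros i. rewrite column_left_halves. apply HQ.
Qed.
End Reduction.

Lemma parallel_total P Q : total P -> total Q -> total (parallel P Q).
Proof. intros HP HQ Z. split; [apply HP|apply HQ]. Qed.

(* The strong case: Psi sees only S, so its oracle is the table of S_k. *)
Definition table_oracleP :=
  PComp ifzP [PComp ltP [PProj 3; PProj 0]; PZero; PComp digitP [PProj 2; constP 3; PProj 3]].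

Lemma table_oracleP_ev X c k tS n : eval table_oracleP X [c; k; tS; n] (ocode (Otab tS c n)).
Proof.
  eapply eval_eq. unfold table_oracleP. ev. simpl. unfold Otab. destruct (n <? c); simpl; auto.
  rewrite ocode_dec3; auto. apply digit_lt; lia.
Qed.

Lemma strong_case P Q : total P -> total Q -> finite_tolerance P ->
  strong_weihrauch_le (parallel Q P) P -> strong_weihrauch_le (omega_power Q) P.
Proof.
  intros HP HQ [Theta HTh] [Phi [Psi Hred]].
  assert (Phi_total : forall Z, exists B, computes Phi Z B).
  { intros Z. destruct (Hred Z (parallel_total Q P HQ HP Z)) as [[B [HB _]] _]. eauto. }
  apply (omega_reduction P Q HP Theta HTh Phi Psi Phi_total (fun _ S => S)
           (fun Z B S HB HS => proj2 (Hred Z (parallel_total Q P HQ HP Z)) B HB S HS)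
           (fun _ T => T) POracle (fun X => X) (fun X m => ev_oracle X [m])
           (fun _ _ => eq_refl) table_oracleP (fun X c k tS n => Otab tS c n) table_oracleP_ev).
  - intros A T S c k tS n b Hs Hn. apply Hs; auto.
  - intros A T S c k tS n Hc. apply Hc; auto.
Qed.

(* The weak case: the input is A (+) T, and Psi sees Z_k (+) S_k, whose even
   half Z_k = A_k (+) C_(k+1) is recomputed from A. *)
Definition left_readP := PComp POracle [PComp mulP [constP 2; PProj 0]].
Definition right_readP := PComp POracle [PComp addP [PComp mulP [constP 2; PProj 0]; one]].

Lemma left_read_ev X m : eval left_readP X [m] (b2n (left_part X m)).
Proof. eapply eval_eq. unfold left_readP. ev. reflexivity. Qed.

Lemma right_read_ev X m : eval right_readP X [m] (b2n (right_part X m)).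
Proof. eapply eval_eq. unfold right_readP. ev. reflexivity. Qed.

Section Weak.
Variable Phi : prog.
Hypothesis Phi_total : forall Z, exists B, computes Phi Z B.

Definition weak_oracle (X : cset) (c k tS n : nat) : option bool :=
  if Nat.even n
  then Some (join (column (left_part X) k) (Cset Phi Phi_total (left_part X) (S k)) (Nat.div2 n))
  else Otab tS c (Nat.div2 n).

Definition weak_oracleP := PComp ifzP [PComp evenP [PProj 3];
     PComp ifzP [PComp ltP [PComp div2P [PProj 3]; PProj 0]; PZero;
                 PComp digitP [PProj 2; constP 3; PComp div2P [PProj 3]]];
     PComp PSucc [PComp ifzP [PComp evenP [PComp div2P [PProj 3]];
          PComp (CsetP Phi left_readP) [PComp PSucc [PProj 1]; PComp div2P [PComp div2P [PProj 3]]];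
          PComp left_readP [PComp tonatP [PProj 1; PComp div2P [PComp div2P [PProj 3]]]]]]].

Lemma Cset_left_ev X k y : eval (CsetP Phi left_readP) X [k; y] (b2n (Cset Phi Phi_total (left_part X) k y)).
Proof. apply (Cset_ev Phi Phi_total left_readP left_part left_read_ev). Qed.
Hint Resolve Cset_left_ev left_read_ev : evdb.

Lemma weak_oracleP_ev X c k tS n : eval weak_oracleP X [c; k; tS; n] (ocode (weak_oracle X c k tS n)).
Proof.
  eapply eval_eq. unfold weak_oracleP. ev. simpl. unfold weak_oracle.
  destruct (Nat.even n); simpl.
  - unfold join, column. destruct (Nat.even (Nat.div2 n)); reflexivity.
  - unfold Otab. destruct (Nat.div2 n <? c); simpl; auto. rewrite ocode_dec3; auto. apply digit_lt; lia.
Qed.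
End Weak.

Lemma weak_case P Q : total P -> total Q -> finite_tolerance P ->
  weihrauch_le (parallel Q P) P -> weihrauch_le (omega_power Q) P.
Proof.
  intros HP HQ [Theta HTh] [Phi [Psi Hred]].
  assert (Phi_total : forall Z, exists B, computes Phi Z B).
  { intros Z. destruct (Hred Z (parallel_total Q P HQ HP Z)) as [[B [HB _]] _]. eauto. }
  apply (omega_reduction P Q HP Theta HTh Phi Psi Phi_total join
           (fun Z B S HB HS => proj2 (Hred Z (parallel_total Q P HQ HP Z)) B HB S HS)
           join right_readP right_part right_read_ev right_join
           (weak_oracleP Phi) (weak_oracle Phi Phi_total) (weak_oracleP_ev Phi Phi_total)).
  - intros A T S c k tS n b Hs Hn. unfold weak_oracle in Hn. rewrite left_join in Hn.
    unfold join at 1. destruct (Nat.even n).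
    + injection Hn; intros; subst. reflexivity.
    + apply Hs; auto.
  - intros A T S c k tS n Hc. unfold weak_oracle. rewrite left_join. unfold join at 2.
    destruct (Nat.even n).
    + reflexivity.
    + apply Hc. apply div2_le.
Qed.

Theorem theorem2p5 (P Q : problem) :
  total P -> total Q -> finite_tolerance P ->
  (strong_weihrauch_le (parallel Q P) P -> strong_weihrauch_le (omega_power Q) P) /\
  (weihrauch_le (parallel Q P) P -> weihrauch_le (omega_power Q) P).
Proof.
  intros HP HQ Htol. split.
  - apply strong_case; assumption.
  - apply weak_case; assumption.
Qed.
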